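(* Let $S$ be an inverse semigroup with zero. Then $S$ is a weak semilattice if and only if its Booleanization $\mathsf{B}(S)$ is a $\wedge$-semigroup.
   Context: Inverse semigroups carry the natural partial order; $x^{\downarrow}=\{s: s\le x\}$. $S$ is a weak semilattice if for all $a,b\in S$ the set $a^{\downarrow}\cap b^{\downarrow}$ equals $F^{\downarrow}=\{s : s\le f \text{ for some } f\in F\}$ for some finite $F\subseteq S$. A $\wedge$-semigroup is an inverse semigroup in which every two elements have a meet. Elements $s,t$ are compatible if $s^{-1}t,st^{-1}$ are idempotents. A Boolean algebra means a distributive lattice with bottom in which each principal order ideal is a unital Boolean algebra. A Boolean inverse semigroup is an inverse semigroup with zero having joins of all compatible pairs, with multiplication distributing over them, whose idempotents form a Boolean algebra. Homomorphisms preserve zero; morphisms are homomorphisms preserving joins of compatible pairs. The Booleanization of $S$ is the Boolean inverse semigroup $\mathsf{B}(S)$ with an injective homomorphism $\beta\colon S\to\mathsf{B}(S)$ such that every homomorphism $\theta$ from $S$ to a Boolean inverse semigroup $T$ factors as $\theta=\gamma\circ\beta$ for a unique morphism $\gamma\colon \mathsf{B}(S)\to T$ (unique up to isomorphism). *)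

From Stdlib Require Import List.
Import ListNotations.

Record InvSemigroup0 : Type := {
  carrier :> Type;
  mul : carrier -> carrier -> carrier;
  inv : carrier -> carrier;
  zero : carrier;
  mulA : forall a b c, mul a (mul b c) = mul (mul a b) c;
  inv_l : forall a, mul (mul a (inv a)) a = a;
  inv_r : forall a, mul (mul (inv a) a) (inv a) = inv a;
  inv_uniq : forall a b, mul (mul a b) a = a -> mul (mul b a) b = b -> b = inv a;
  zero_l : forall a, mul zero a = zero;
  zero_r : forall a, mul a zero = zero
}.

Arguments mul {_} _ _.
Arguments inv {_} _.
Arguments zero {_}.

Section Defs.
Variable S : InvSemigroup0.

Definition idempotent (e : S) : Prop := mul e e = e.

Definition nat_le (s t : S) : Prop := exists e : S, idempotent e /\ s = mul t e.

Definition weak_semilattice : Prop :=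
  forall a b : S, exists F : list S,
    forall s : S, (nat_le s a /\ nat_le s b) <-> (exists f, In f F /\ nat_le s f).

Definition is_lub_in (P : S -> Prop) (x y j : S) : Prop :=
  P j /\ nat_le x j /\ nat_le y j /\
  forall k, P k -> nat_le x k -> nat_le y k -> nat_le j k.

Definition is_glb_in (P : S -> Prop) (x y m : S) : Prop :=
  P m /\ nat_le m x /\ nat_le m y /\
  forall k, P k -> nat_le k x -> nat_le k y -> nat_le k m.

Definition anyS : S -> Prop := fun _ => True.

Definition wedge_semigroup : Prop :=
  forall a b : S, exists m, is_glb_in anyS a b m.

Definition compatible (s t : S) : Prop :=
  idempotent (mul (inv s) t) /\ idempotent (mul s (inv t)).

(** The idempotents form a Boolean algebra in the sense of the paper:
    a distributive lattice with bottom in which every principal order ideal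
    is a unital Boolean algebra. *)
Definition idempotents_boolean : Prop :=
  (forall e f, idempotent e -> idempotent f -> exists j, is_lub_in idempotent e f j) /\
  (forall e f, idempotent e -> idempotent f -> exists m, is_glb_in idempotent e f m) /\
  (idempotent zero /\ forall e, idempotent e -> nat_le zero e) /\
  (forall e f g j m1 m2 x,
      idempotent e -> idempotent f -> idempotent g ->
      is_lub_in idempotent f g j ->
      is_glb_in idempotent e f m1 -> is_glb_in idempotent e g m2 ->
      is_glb_in idempotent e j x ->
      is_lub_in idempotent m1 m2 x) /\
  (* each principal ideal [0, e] is complemented (hence a unital Boolean algebra) *)
  (forall e f, idempotent e -> idempotent f -> nat_le f e ->
      exists g, idempotent g /\ nat_le g e /\
        is_glb_in idempotent f g zero /\ is_lub_in idempotent f g e).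

Definition boolean_inverse_semigroup : Prop :=
  (forall a b, compatible a b -> exists j, is_lub_in anyS a b j) /\
  (forall a b j s, compatible a b -> is_lub_in anyS a b j ->
      is_lub_in anyS (mul s a) (mul s b) (mul s j) /\
      is_lub_in anyS (mul a s) (mul b s) (mul j s)) /\
  idempotents_boolean.

End Defs.

Arguments nat_le {_} _ _.
Arguments compatible {_} _ _.
Arguments is_lub_in {_} _ _ _ _.
Arguments anyS {_} _.

Definition homomorphism (S T : InvSemigroup0) (f : S -> T) : Prop :=
  (forall a b, f (mul a b) = mul (f a) (f b)) /\ f zero = zero.

Definition morphism (S T : InvSemigroup0) (f : S -> T) : Prop :=
  homomorphism S T f /\
  forall a b j, compatible a b -> is_lub_in anyS a b j ->
    is_lub_in anyS (f a) (f b) (f j).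

Definition is_booleanization (S B : InvSemigroup0) (beta : S -> B) : Prop :=
  boolean_inverse_semigroup B /\
  homomorphism S B beta /\
  (forall x y, beta x = beta y -> x = y) /\
  forall (T : InvSemigroup0) (theta : S -> T),
    boolean_inverse_semigroup T -> homomorphism S T theta ->
    (exists gamma : B -> T, morphism B T gamma /\ forall x, theta x = gamma (beta x)) /\
    (forall g1 g2 : B -> T, morphism B T g1 -> morphism B T g2 ->
       (forall x, theta x = g1 (beta x)) -> (forall x, theta x = g2 (beta x)) ->
       forall y, g1 y = g2 y).

(* The Booleanization B(S) is generated by β(S) under products, inverses, joins of
   compatible pairs and relative complements of idempotents (by the uniqueness part of its
   universal property).  Hence every idempotent of B(S) is a finite join of cells
   C(e, K) = β(e) \ β(k₁) \ ⋯ \ β(kₙ) with e and the kᵢ idempotent, and every element is a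
   finite join of elements β(c) C(e, K), each below β(c).  A cell vanishes unless its point e
   is nonzero and fixed by no kᵢ.  For such a cell, the morphism γ on B(S) extending the
   Wagner–Preston representation of S on its nonzero elements fixes e, so evaluating at e
   shows that β(a) C(e, K) = β(b) C(e, K) with C(e, K) ≤ β(a⁻¹a) forces ae = be.

   If a↓ ∩ b↓ = F↓, this shows that ⋁β(F) is the meet of β(a) and β(b); meets of elements of
   β(S) then extend to all of B(S) by restriction and finite joins.  Conversely, if m is the
   meet of β(a) and β(b), then 0 together with the elements ae, for the cells C(e, K) of m⁻¹m
   with a nonzero point, is a finite F with a↓ ∩ b↓ = F↓. *)

From Stdlib Require Import List Classical ClassicalEpsilon.
From Stdlib Require Import FunctionalExtensionality PropExtensionality ProofIrrelevance.
Import ListNotations.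

Arguments mulA {_} _ _ _.
Arguments inv_l {_} _.
Arguments inv_r {_} _.
Arguments inv_uniq {_} _ _ _ _.
Arguments zero_l {_} _.
Arguments zero_r {_} _.
Arguments idempotent {_} _.
Arguments is_glb_in {_} _ _ _ _.

Local Infix "**" := mul (at level 40, left associativity).
Local Notation "x ⁻¹" := (inv x) (at level 2, format "x ⁻¹").
Local Infix "≤" := nat_le (at level 70).

Ltac rassoc := repeat rewrite <- mulA.

Lemma list_lift {A T : Type} (Q : A -> Prop) (f : A -> T) (L : list T) :
  (forall p, In p L -> exists a, Q a /\ p = f a) ->
  exists C, (forall a, In a C -> Q a) /\ L = map f C.
Proof.
  induction L as [| p L IH]; intros H; [exists []; split; [intros ? [] | auto] |].
  destruct (H p (or_introl eq_refl)) as [a [Ha ->]].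
  destruct IH as [C [HC ->]]; [intros q Hq; apply H; right; auto |].
  exists (a :: C). split; [intros a' [<- | Ha']; auto | reflexivity].
Qed.

Lemma list_image {A T : Type} (P : A -> Prop) (f : A -> T) (C : list A) :
  exists F, forall y, In y F <-> exists a, In a C /\ P a /\ y = f a.
Proof.
  induction C as [| a C [F HF]]; [exists []; firstorder |].
  destruct (classic (P a)) as [Ha | Ha]; [exists (f a :: F) | exists F]; intro y; simpl;
    rewrite ?HF; split; firstorder congruence.
Qed.

(** * Inverse semigroups *)

Section InverseSemigroup.
Context {S : InvSemigroup0}.
Implicit Types a b c e f j k m p q r s t u w x y z : S.

Lemma inv_inv a : a⁻¹⁻¹ = a.
Proof. symmetry. apply inv_uniq; [apply inv_r | apply inv_l]. Qed.

Lemma idem_inv e : idempotent e -> e⁻¹ = e.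
Proof. unfold idempotent; intro He. symmetry. apply inv_uniq; rewrite !He; auto. Qed.

Lemma mul_inv_mul a : a ** (a⁻¹ ** a) = a.
Proof. rewrite mulA. apply inv_l. Qed.
Lemma inv_mul_inv a : a⁻¹ ** (a ** a⁻¹) = a⁻¹.
Proof. rewrite mulA. apply inv_r. Qed.
Lemma mul_inv_mulA a z : a ** (a⁻¹ ** (a ** z)) = a ** z.
Proof. rewrite (mulA a⁻¹), (mulA a), mul_inv_mul. auto. Qed.
Lemma inv_mul_invA a z : a⁻¹ ** (a ** (a⁻¹ ** z)) = a⁻¹ ** z.
Proof. rewrite (mulA a), (mulA a⁻¹), inv_mul_inv. auto. Qed.

Lemma idem_mulA e z : idempotent e -> e ** (e ** z) = e ** z.
Proof. intro He. rewrite mulA, He. auto. Qed.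

Lemma idem_mul_inv a : idempotent (a ** a⁻¹).
Proof. unfold idempotent. rewrite mulA, inv_l. auto. Qed.
Lemma idem_inv_mul a : idempotent (a⁻¹ ** a).
Proof. unfold idempotent. rewrite mulA, inv_r. auto. Qed.

Lemma idem_zero : idempotent (@zero S).
Proof. apply zero_l. Qed.

Lemma inv_zero : (@zero S)⁻¹ = zero.
Proof. apply idem_inv, idem_zero. Qed.

(* The inverse x of ef satisfies x = f x e (by uniqueness of inverses), which
   makes x idempotent, hence so is ef = x⁻¹. *)
Lemma idem_mul e f : idempotent e -> idempotent f -> idempotent (e ** f).
Proof.
  unfold idempotent; intros He Hf.
  set (x := (e ** f)⁻¹).
  assert (Hx : f ** (x ** e) = x).
  { unfold x. apply inv_uniq.
    - rassoc. rewrite (idem_mulA f), (idem_mulA e), (mulA e f), (mulA (e ** f)); auto.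
      apply inv_l.
    - rassoc. rewrite (idem_mulA e), (idem_mulA f), (mulA e f), (mulA _ (e ** f)),
        (mulA _ _ e); auto. rewrite inv_r. auto. }
  assert (Hxx : x ** x = x).
  { rewrite <- Hx at 1 2. rassoc. rewrite (mulA e f), (mulA x (e ** f)), (mulA _ x e).
    unfold x. rewrite inv_r. fold x. auto. }
  rewrite <- (inv_inv (e ** f)). fold x. rewrite idem_inv; auto.
Qed.

Lemma idem_comm e f : idempotent e -> idempotent f -> e ** f = f ** e.
Proof.
  intros He Hf. pose proof (idem_mul e f He Hf) as Hef.
  pose proof (idem_mul f e Hf He) as Hfe. unfold idempotent in *.
  assert (E : f ** e = (e ** f)⁻¹).
  { apply inv_uniq.
    - rassoc. rewrite (idem_mulA f _ Hf), (idem_mulA e _ He), (mulA e f). exact Hef.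
    - rassoc. rewrite (idem_mulA e _ He), (idem_mulA f _ Hf), (mulA f e). exact Hfe. }
  rewrite E, idem_inv; auto.
Qed.

Lemma idem_commA e f z : idempotent e -> idempotent f -> e ** (f ** z) = f ** (e ** z).
Proof. intros He Hf. rewrite !mulA, (idem_comm e f); auto. Qed.

Lemma idem_swap p r t z : idempotent p -> idempotent (r ** t) ->
  p ** (r ** (t ** z)) = r ** (t ** (p ** z)).
Proof. intros H1 H2. rewrite (mulA r t), (mulA r t). apply idem_commA; auto. Qed.

Lemma idem_swap2 p q r t z : idempotent (p ** q) -> idempotent (r ** t) ->
  p ** (q ** (r ** (t ** z))) = r ** (t ** (p ** (q ** z))).
Proof. intros H1 H2. rewrite (mulA p q), (mulA p q). apply idem_swap; auto. Qed.

Lemma inv_mul a b : (a ** b)⁻¹ = b⁻¹ ** a⁻¹.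
Proof.
  symmetry. apply inv_uniq.
  - rassoc. rewrite (idem_swap2 b b⁻¹ a⁻¹ a), mul_inv_mulA, mul_inv_mul; auto.
    + apply idem_mul_inv.
    + apply idem_inv_mul.
  - rassoc. rewrite (idem_swap2 a⁻¹ a b b⁻¹), inv_mul_invA, inv_mul_inv; auto.
    + apply idem_inv_mul.
    + apply idem_mul_inv.
Qed.

Lemma idem_conj a e : idempotent e -> idempotent (a ** e ** a⁻¹).
Proof.
  intro He. unfold idempotent. rassoc.
  rewrite (idem_swap e a⁻¹ a), mul_inv_mulA, (idem_mulA e _ He); auto. apply idem_inv_mul.
Qed.

Lemma idem_conj_inv a e : idempotent e -> idempotent (a⁻¹ ** e ** a).
Proof. intro He. pose proof (idem_conj a⁻¹ e He) as H. rewrite inv_inv in H. auto. Qed.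

Lemma idem_eq_inv_mul e : idempotent e -> e = e⁻¹ ** e.
Proof. intro He. rewrite idem_inv; auto. Qed.

Lemma conj_mul_conj t x y : idempotent x ->
  t⁻¹ ** x ** t ** (t⁻¹ ** y ** t) = t⁻¹ ** (x ** y) ** t.
Proof.
  intro Hx. rassoc. rewrite (mulA t t⁻¹ (y ** t)), (idem_commA x (t ** t⁻¹)); auto.
  - rassoc. rewrite inv_mul_invA. auto.
  - apply idem_mul_inv.
Qed.

Lemma idem_mul_shift t e : idempotent e -> e ** t = t ** (t⁻¹ ** e ** t).
Proof.
  intro He. rassoc. rewrite (mulA t t⁻¹), (mulA (t ** t⁻¹) e), (idem_comm (t ** t⁻¹) e);
    [| apply idem_mul_inv | auto]. rassoc. rewrite mul_inv_mul. auto.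
Qed.

Lemma nat_leE s t : s ≤ t <-> s = t ** (s⁻¹ ** s).
Proof.
  split.
  - intros [e [He ->]]. rewrite inv_mul, (idem_inv e He). rassoc.
    rewrite (idem_swap e t⁻¹ t), mul_inv_mulA, He; auto. apply idem_inv_mul.
  - intro H. exists (s⁻¹ ** s). split; auto. apply idem_inv_mul.
Qed.

Lemma nat_le_intro_l s t f : idempotent f -> s = f ** t -> s ≤ t.
Proof.
  intros Hf ->. exists (t⁻¹ ** f ** t). split.
  - apply idem_conj_inv; auto.
  - rassoc. rewrite (mulA t t⁻¹), (mulA (t ** t⁻¹) f), (idem_comm (t ** t⁻¹) f);
      [| apply idem_mul_inv | auto]. rassoc. rewrite mul_inv_mul. auto.
Qed.

Lemma nat_leE_l s t : s ≤ t <-> s = (s ** s⁻¹) ** t.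
Proof.
  split; intro H.
  - destruct H as [e [He ->]]. rewrite inv_mul, (idem_inv e He). rassoc.
    rewrite (idem_mulA e _ He), (idem_comm e (t⁻¹ ** t)), mulA, mul_inv_mul; auto.
    apply idem_inv_mul.
  - apply (nat_le_intro_l _ _ (s ** s⁻¹)); auto. apply idem_mul_inv.
Qed.

Lemma nat_le_refl s : s ≤ s.
Proof. apply nat_leE. symmetry. apply mul_inv_mul. Qed.

Lemma nat_le_trans r s t : r ≤ s -> s ≤ t -> r ≤ t.
Proof.
  intros [e [He ->]] [f [Hf ->]]. exists (f ** e). split.
  - apply idem_mul; auto.
  - rassoc. auto.
Qed.

Lemma nat_le_zero s : zero ≤ s.
Proof. exists zero. split; [apply idem_zero | symmetry; apply zero_r]. Qed.

Lemma nat_le_mul_idem_r s e : idempotent e -> s ** e ≤ s.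
Proof. intros He. exists e; split; auto. Qed.

Lemma nat_le_mul_idem_l s e : idempotent e -> e ** s ≤ s.
Proof. intros He. apply (nat_le_intro_l _ _ e He). auto. Qed.

Lemma idem_nat_le s e : idempotent e -> s ≤ e -> idempotent s.
Proof. intros He [f [Hf ->]]. apply idem_mul; auto. Qed.

Lemma idem_nat_leE e f : idempotent f -> e ≤ f <-> idempotent e /\ e = e ** f.
Proof.
  intros Hf. split.
  - intros H. split; [apply (idem_nat_le e f); auto |].
    destruct H as [g [Hg ->]]. rassoc. rewrite (idem_comm g f Hg Hf), (idem_mulA f _ Hf). auto.
  - intros [He H]. exists e. split; auto. rewrite H at 1. apply idem_comm; auto.
Qed.

Lemma idem_nat_le_mul_r e f : idempotent f -> e ≤ f -> e = e ** f.
Proof. intros Hf H. apply idem_nat_leE in H; tauto. Qed.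

Lemma idem_nat_le_mul_l e f : idempotent f -> e ≤ f -> e = f ** e.
Proof.
  intros Hf H. rewrite (idem_comm f e); [apply idem_nat_le_mul_r | | apply (idem_nat_le e f)]; auto.
Qed.

Lemma nat_le_mul_l u s t : s ≤ t -> u ** s ≤ u ** t.
Proof. intros [e [He ->]]. exists e. split; auto. apply mulA. Qed.

Lemma nat_le_mul_r u s t : s ≤ t -> s ** u ≤ t ** u.
Proof.
  intros H. apply nat_leE_l in H. apply (nat_le_intro_l _ _ (s ** s⁻¹)).
  - apply idem_mul_inv.
  - rewrite H at 1. rassoc. auto.
Qed.

Lemma nat_le_mul s t s' t' : s ≤ t -> s' ≤ t' -> s ** s' ≤ t ** t'.
Proof.
  intros. apply nat_le_trans with (s ** t'); [apply nat_le_mul_l | apply nat_le_mul_r]; auto.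
Qed.

Lemma nat_le_inv s t : s ≤ t -> s⁻¹ ≤ t⁻¹.
Proof.
  intros [e [He ->]]. apply (nat_le_intro_l _ _ e He). rewrite inv_mul, idem_inv; auto.
Qed.

Lemma nat_le_inv_mul s t : s ≤ t -> s⁻¹ ** s ≤ t⁻¹ ** t.
Proof. intros. apply nat_le_mul; auto. apply nat_le_inv; auto. Qed.

Lemma nat_le_antisym s t : s ≤ t -> t ≤ s -> s = t.
Proof.
  intros H1 H2.
  assert (E : s⁻¹ ** s = t⁻¹ ** t).
  { pose proof (idem_nat_le_mul_r _ _ (idem_inv_mul t) (nat_le_inv_mul _ _ H1)) as A.
    pose proof (idem_nat_le_mul_r _ _ (idem_inv_mul s) (nat_le_inv_mul _ _ H2)) as B.
    rewrite A, (idem_comm (s⁻¹ ** s)), <- B; auto; apply idem_inv_mul. }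
  apply nat_leE in H1. apply nat_leE in H2. rewrite H1, E. apply mul_inv_mul.
Qed.

Lemma nat_le_zero_eq s : s ≤ zero -> s = zero.
Proof. intros [e [_ ->]]. apply zero_l. Qed.

Lemma inv_mul_eq_zero s : s⁻¹ ** s = zero -> s = zero.
Proof. intro E. rewrite <- (mul_inv_mul s), E. apply zero_r. Qed.

Lemma compatible_of_nat_le x y w : x ≤ w -> y ≤ w -> compatible x y.
Proof.
  intros H1 H2. split.
  - apply nat_leE in H1, H2.
    pose proof (idem_inv_mul x) as He. pose proof (idem_inv_mul y) as Hf.
    set (e := x⁻¹ ** x) in *. set (f := y⁻¹ ** y) in *.
    rewrite H1, H2, inv_mul, (idem_inv e He). rassoc. rewrite (mulA w⁻¹ w f).
    apply idem_mul; auto. apply idem_mul; auto. apply idem_inv_mul.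
  - apply nat_leE_l in H1, H2.
    pose proof (idem_mul_inv x) as He. pose proof (idem_mul_inv y) as Hf.
    set (e := x ** x⁻¹) in *. set (f := y ** y⁻¹) in *.
    rewrite H1, H2, inv_mul, (idem_inv f Hf). rassoc. rewrite (mulA w w⁻¹ f).
    apply idem_mul; auto. apply idem_mul; auto. apply idem_mul_inv.
Qed.

Lemma compatible_idem e f : idempotent e -> idempotent f -> compatible e f.
Proof.
  intros He Hf. split; rewrite ?(idem_inv e He), ?(idem_inv f Hf); apply idem_mul; auto.
Qed.

Lemma is_lub_in_unique (P : S -> Prop) a b j j' :
  is_lub_in P a b j -> is_lub_in P a b j' -> j = j'.
Proof. intros [? [? [? H]]] [? [? [? H']]]. apply nat_le_antisym; auto. Qed.

Lemma is_glb_in_unique (P : S -> Prop) a b m m' :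
  is_glb_in P a b m -> is_glb_in P a b m' -> m = m'.
Proof. intros [? [? [? H]]] [? [? [? H']]]. apply nat_le_antisym; auto. Qed.

Lemma is_glb_in_idem_mul e f : idempotent e -> idempotent f ->
  is_glb_in idempotent e f (e ** f).
Proof.
  intros He Hf. split; [apply idem_mul; auto | split; [| split]].
  - apply nat_le_mul_idem_r; auto.
  - apply nat_le_mul_idem_l; auto.
  - intros k Hk H1 H2. apply idem_nat_le_mul_r in H1, H2; auto.
    apply idem_nat_leE; [apply idem_mul; auto |]. split; auto. rewrite mulA, <- H1. auto.
Qed.
End InverseSemigroup.

Section Homomorphism.
Variables (S T : InvSemigroup0) (f : S -> T).
Hypothesis Hf : homomorphism S T f.

Lemma hom_mul a b : f (a ** b) = f a ** f b.
Proof. apply Hf. Qed.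

Lemma hom_zero : f zero = zero.
Proof. apply Hf. Qed.

Lemma hom_inv a : f a⁻¹ = (f a)⁻¹.
Proof. apply inv_uniq; rewrite <- !hom_mul; f_equal; [apply inv_l | apply inv_r]. Qed.

Lemma hom_idem e : idempotent e -> idempotent (f e).
Proof. unfold idempotent. intro H. rewrite <- hom_mul, H. auto. Qed.

Lemma hom_nat_le s t : s ≤ t -> f s ≤ f t.
Proof. intros [e [He ->]]. exists (f e). split; [apply hom_idem | apply hom_mul]; auto. Qed.
End Homomorphism.

(** * The symmetric inverse semigroup and the Wagner–Preston representation *)

Section SymmetricInverseSemigroup.
Variable X : Type.

Definition partial_bijection (R : X -> X -> Prop) : Prop :=
  (forall x y y', R x y -> R x y' -> y = y') /\ (forall x x' y, R x y -> R x' y -> x = x').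

Definition pbij : Type := {R : X -> X -> Prop | partial_bijection R}.

Definition pbij_rel (p : pbij) : X -> X -> Prop := proj1_sig p.
Coercion pbij_rel : pbij >-> Funclass.

Lemma pbij_functional (p : pbij) x y y' : p x y -> p x y' -> y = y'.
Proof. apply (proj1 (proj2_sig p)). Qed.

Lemma pbij_injective (p : pbij) x x' y : p x y -> p x' y -> x = x'.
Proof. apply (proj2 (proj2_sig p)). Qed.

Lemma pbij_ext (p q : pbij) : (forall x y, p x y <-> q x y) -> p = q.
Proof.
  destruct p as [R HR], q as [Q HQ]. unfold pbij_rel; simpl. intro H.
  assert (R = Q).
  { extensionality x. extensionality y. apply propositional_extensionality. auto. }
  subst. f_equal. apply proof_irrelevance.
Qed.

Definition pbij_of (R : X -> X -> Prop) (HR : partial_bijection R) : pbij := exist _ R HR.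

Lemma partial_bijection_comp (p q : pbij) :
  partial_bijection (fun x z => exists y, q x y /\ p y z).
Proof.
  split.
  - intros x z z' [y [A B]] [y' [C D]]. pose proof (pbij_functional q _ _ _ A C). subst.
    apply (pbij_functional p _ _ _ B D).
  - intros x x' z [y [A B]] [y' [C D]]. pose proof (pbij_injective p _ _ _ B D). subst.
    apply (pbij_injective q _ _ _ A C).
Qed.

Lemma partial_bijection_converse (p : pbij) : partial_bijection (fun x y => p y x).
Proof. split; intros ? ? ? ? ?; [eapply pbij_injective | eapply pbij_functional]; eauto. Qed.

Lemma partial_bijection_empty : partial_bijection (fun _ _ => False).
Proof. split; intros ? ? ? []. Qed.

Definition pbij_mul (p q : pbij) : pbij := pbij_of _ (partial_bijection_comp p q).
Definition pbij_inv (p : pbij) : pbij := pbij_of _ (partial_bijection_converse p).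
Definition pbij_zero : pbij := pbij_of _ partial_bijection_empty.

Lemma pbij_mulA a b c : pbij_mul a (pbij_mul b c) = pbij_mul (pbij_mul a b) c.
Proof. apply pbij_ext. intros x y. simpl. firstorder. Qed.

Lemma pbij_inv_l a : pbij_mul (pbij_mul a (pbij_inv a)) a = a.
Proof.
  apply pbij_ext. intros x y. simpl. split.
  - intros [u [H1 [v [H2 H3]]]]. pose proof (pbij_injective a _ _ _ H1 H2). subst. auto.
  - intros H. exists y. split; auto. exists x. auto.
Qed.

Lemma pbij_inv_r a : pbij_mul (pbij_mul (pbij_inv a) a) (pbij_inv a) = pbij_inv a.
Proof.
  apply pbij_ext. intros x y. simpl. split.
  - intros [u [H1 [v [H2 H3]]]]. pose proof (pbij_functional a _ _ _ H1 H2). subst. auto.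
  - intros H. exists y. split; auto. exists x. auto.
Qed.

Lemma pbij_inv_uniq a b : pbij_mul (pbij_mul a b) a = a -> pbij_mul (pbij_mul b a) b = b ->
  b = pbij_inv a.
Proof.
  intros E1 E2. apply pbij_ext. intros x y. simpl. split.
  - intro H. pose proof H as H0. rewrite <- E2 in H0. destruct H0 as [u [H1 [v [H2 H3]]]].
    pose proof (pbij_functional b _ _ _ H H1). subst u.
    pose proof (pbij_injective b _ _ _ H H3). subst v. auto.
  - intro H. pose proof H as H0. rewrite <- E1 in H0. destruct H0 as [u [H1 [v [H2 H3]]]].
    pose proof (pbij_functional a _ _ _ H H1). subst u.
    pose proof (pbij_injective a _ _ _ H H3). subst v. auto.
Qed.

Lemma pbij_zero_l a : pbij_mul pbij_zero a = pbij_zero.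
Proof. apply pbij_ext. intros x y. simpl. firstorder. Qed.

Lemma pbij_zero_r a : pbij_mul a pbij_zero = pbij_zero.
Proof. apply pbij_ext. intros x y. simpl. firstorder. Qed.

Definition SymInv : InvSemigroup0 :=
  {| carrier := pbij; mul := pbij_mul; inv := pbij_inv; zero := pbij_zero;
     mulA := pbij_mulA; inv_l := pbij_inv_l; inv_r := pbij_inv_r; inv_uniq := pbij_inv_uniq;
     zero_l := pbij_zero_l; zero_r := pbij_zero_r |}.

Implicit Types p q r : pbij.

Lemma sym_idemE p : @idempotent SymInv p <-> forall x y, p x y -> x = y.
Proof.
  unfold idempotent. split.
  - intros H x y Hxy. pose proof Hxy as H0. rewrite <- H in H0. destruct H0 as [u [H1 H2]].
    pose proof (pbij_functional p _ _ _ Hxy H1). subst u.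
    apply (pbij_injective p _ _ _ Hxy H2).
  - intros H. apply pbij_ext. intros x y. simpl. split.
    + intros [u [H1 H2]]. pose proof (H _ _ H1). subst. auto.
    + intros Hxy. exists x. pose proof (H _ _ Hxy). subst. auto.
Qed.

Lemma partial_bijection_domain p : partial_bijection (fun x y => x = y /\ exists z, p x z).
Proof. split; intros ? ? ? [? ?] [? ?]; subst; auto. Qed.

Lemma sym_nat_leE p q : @nat_le SymInv p q <-> forall x y, p x y -> q x y.
Proof.
  split.
  - intros [e [He ->]] x y [u [H1 H2]]. rewrite sym_idemE in He.
    pose proof (He _ _ H1). subst. auto.
  - intros H. exists (pbij_of _ (partial_bijection_domain p)). split.
    + apply sym_idemE. intros x y [E _]. auto.
    + apply pbij_ext. intros x y. simpl. split.
      * intros Hxy. exists x. split; eauto.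
      * intros [u [[-> [z Hz]] H2]]. pose proof (pbij_functional q _ _ _ (H _ _ Hz) H2).
        subst. auto.
Qed.

Lemma sym_compatibleE p q : @compatible SymInv p q <->
  (forall x x' y, q x y -> p x' y -> x = x') /\ (forall x y y', q x y -> p x y' -> y = y').
Proof.
  unfold compatible. rewrite !sym_idemE. simpl. split.
  - intros [H1 H2]. split.
    + intros x x' y Hq Hp. apply H1. eauto.
    + intros x y y' Hq Hp. apply H2. eauto.
  - intros [H1 H2]. split; intros x z [y [A B]]; eauto.
Qed.

Lemma partial_bijection_union p q : @compatible SymInv p q ->
  partial_bijection (fun x y => p x y \/ q x y).
Proof.
  rewrite sym_compatibleE. intros [H1 H2]. split.
  - intros x y y' [A|A] [C|C];
      [eapply pbij_functional | symmetry | | eapply pbij_functional]; eauto.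
  - intros x x' y [A|A] [C|C];
      [eapply pbij_injective | symmetry | | eapply pbij_injective]; eauto.
Qed.

Lemma partial_bijection_diff p q : partial_bijection (fun x y => p x y /\ ~ q x y).
Proof.
  split; intros ? ? ? [A _] [C _]; [eapply pbij_functional | eapply pbij_injective]; eauto.
Qed.

Lemma sym_is_lub_in (P : pbij -> Prop) p q r : P r ->
  (forall x y, r x y <-> p x y \/ q x y) -> @is_lub_in SymInv P p q r.
Proof.
  intros HP H. unfold is_lub_in. rewrite !sym_nat_leE. split; [auto | split; [| split]].
  - intros x y A. apply H; auto.
  - intros x y A. apply H; auto.
  - intros k _ H1 H2. rewrite sym_nat_leE in H1, H2 |- *. intros x y A.
    apply H in A. destruct A; auto.
Qed.

Lemma sym_is_glb_in (P : pbij -> Prop) p q r : P r ->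
  (forall x y, r x y <-> p x y /\ q x y) -> @is_glb_in SymInv P p q r.
Proof.
  intros HP H. unfold is_glb_in. rewrite !sym_nat_leE. split; [auto | split; [| split]].
  - intros x y A. apply H; auto.
  - intros x y A. apply H; auto.
  - intros k _ H1 H2. rewrite sym_nat_leE in H1, H2 |- *. intros x y A. apply H. auto.
Qed.

Definition sym_join p q (H : @compatible SymInv p q) : pbij :=
  pbij_of _ (partial_bijection_union p q H).

Lemma sym_is_joinE p q r : @compatible SymInv p q ->
  (@is_lub_in SymInv anyS p q r <-> forall x y, r x y <-> p x y \/ q x y).
Proof.
  intros Hc. split.
  - intros Hr. replace r with (sym_join p q Hc); [reflexivity |].
    apply (@is_lub_in_unique SymInv anyS p q); auto. apply sym_is_lub_in; [exact I | reflexivity].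
  - intros Hr. apply sym_is_lub_in; auto. exact I.
Qed.

Lemma sym_mul_idemE p q x y : @idempotent SymInv p -> @idempotent SymInv q ->
  pbij_mul p q x y <-> p x y /\ q x y.
Proof.
  rewrite !sym_idemE. intros Hp Hq. simpl. split.
  - intros [u [A B]]. pose proof (Hq _ _ A). subst. pose proof (Hp _ _ B). subst. auto.
  - intros [A B]. exists y. pose proof (Hq _ _ B). subst. auto.
Qed.

Lemma sym_is_meet_idemE p q r : @idempotent SymInv p -> @idempotent SymInv q ->
  @is_glb_in SymInv idempotent p q r -> forall x y, r x y <-> p x y /\ q x y.
Proof.
  intros Hp Hq Hr. rewrite (@is_glb_in_unique SymInv _ p q r (pbij_mul p q) Hr).
  - intros x y. apply sym_mul_idemE; auto.
  - apply (@is_glb_in_idem_mul SymInv); auto.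
Qed.

Lemma sym_join_idem p q H : @idempotent SymInv p -> @idempotent SymInv q ->
  @is_lub_in SymInv idempotent p q (sym_join p q H).
Proof.
  rewrite !sym_idemE. intros Hp Hq. apply sym_is_lub_in; [| reflexivity].
  apply sym_idemE. intros x y [A|A]; auto.
Qed.

Lemma sym_is_join_idemE p q r : @idempotent SymInv p -> @idempotent SymInv q ->
  @is_lub_in SymInv idempotent p q r -> forall x y, r x y <-> p x y \/ q x y.
Proof.
  intros Hp Hq Hr. pose proof (@compatible_idem SymInv p q Hp Hq) as Hc.
  rewrite (@is_lub_in_unique SymInv _ p q r (sym_join p q Hc) Hr); [reflexivity |].
  apply sym_join_idem; auto.
Qed.

Theorem sym_boolean : boolean_inverse_semigroup SymInv.
Proof.
  split; [| split; [| split; [| split; [| split; [| split]]]]].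
  - intros p q Hc. exists (sym_join p q Hc). apply sym_is_joinE; [auto | reflexivity].
  - intros p q j t Hc Hj. rewrite (sym_is_joinE p q j Hc) in Hj. split.
    + apply sym_is_lub_in; [exact I |]. intros x z. simpl. split.
      * intros [y [A B]]. apply Hj in A. destruct A; [left | right]; eauto.
      * intros [[y [A B]] | [y [A B]]]; exists y; split; auto; apply Hj; auto.
    + apply sym_is_lub_in; [exact I |]. intros x z. simpl. split.
      * intros [y [A B]]. apply Hj in B. destruct B; [left | right]; eauto.
      * intros [[y [A B]] | [y [A B]]]; exists y; split; auto; apply Hj; auto.
  - intros e f He Hf. exists (sym_join e f (@compatible_idem SymInv e f He Hf)).
    apply sym_join_idem; auto.
  - intros e f He Hf. exists (pbij_mul e f). apply (@is_glb_in_idem_mul SymInv); auto.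
  - split; [apply (@idem_zero SymInv) | intros e _; apply (@nat_le_zero SymInv)].
  - intros e f g j m1 m2 x He Hf Hg Hj Hm1 Hm2 Hx.
    assert (Hjid : @idempotent SymInv j) by apply Hj.
    apply sym_is_lub_in; [apply Hx |]. intros u v.
    rewrite (sym_is_meet_idemE _ _ _ He Hf Hm1), (sym_is_meet_idemE _ _ _ He Hg Hm2),
      (sym_is_meet_idemE _ _ _ He Hjid Hx), (sym_is_join_idemE _ _ _ Hf Hg Hj).
    tauto.
  - intros e f He Hf Hfe. set (g := pbij_of _ (partial_bijection_diff e f)).
    rewrite sym_nat_leE in Hfe. rewrite sym_idemE in He.
    assert (Hg : @idempotent SymInv g) by (apply sym_idemE; intros x y [A _]; auto).
    exists g. split; [auto | split; [| split]].
    + apply sym_nat_leE. intros x y [A _]. auto.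
    + apply sym_is_glb_in; [apply (@idem_zero SymInv) |]. simpl. tauto.
    + apply sym_is_lub_in; [apply sym_idemE; auto |]. intros x y. simpl.
      specialize (Hfe x y). tauto.
Qed.
End SymmetricInverseSemigroup.

Section WagnerPreston.
Variable S : InvSemigroup0.
Implicit Types a b s : S.

Definition point : Type := {x : S | x <> zero}.

Lemma point_eq (x y : point) : proj1_sig x = proj1_sig y -> x = y.
Proof. destruct x, y; simpl. intros ->. f_equal. apply proof_irrelevance. Qed.

Definition wp_rel s (x y : point) : Prop :=
  s⁻¹ ** s ** proj1_sig x = proj1_sig x /\ proj1_sig y = s ** proj1_sig x.

Lemma partial_bijection_wp s : partial_bijection point (wp_rel s).
Proof.
  unfold wp_rel. split.
  - intros x y y' [_ A] [_ B]. apply point_eq. congruence.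
  - intros x x' y [A1 A2] [B1 B2]. apply point_eq. rewrite <- A1, <- B1, <- !mulA. congruence.
Qed.

Definition wp s : pbij point := pbij_of point _ (partial_bijection_wp s).

Lemma wp_mul a b : wp (a ** b) = pbij_mul point (wp a) (wp b).
Proof.
  apply pbij_ext. intros [x nx] [z nz]. simpl. unfold wp_rel; simpl. split.
  - intros [H1 H2]. rewrite inv_mul in H1.
    assert (Hb : b⁻¹ ** b ** x = x).
    { rewrite <- H1 at 1. rassoc. rewrite inv_mul_invA. rewrite <- !mulA in H1. exact H1. }
    assert (Hnz : b ** x <> zero).
    { intro E. apply nx. rewrite <- Hb, <- mulA, E. apply zero_r. }
    exists (exist _ (b ** x) Hnz). simpl. split; split; auto.
    + rewrite <- H1 at 2. rassoc.
      rewrite (idem_swap2 b b⁻¹ a⁻¹ a), mul_inv_mulA;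
        [auto | apply idem_mul_inv | apply idem_inv_mul].
    + rewrite H2. rassoc. auto.
  - intros [[y ny] [[A1 A2] [B1 B2]]]. simpl in *. subst. split.
    + rewrite inv_mul. rassoc. rewrite (mulA a⁻¹ a), B1, mulA. exact A1.
    + apply mulA.
Qed.

Lemma wp_zero : wp zero = pbij_zero point.
Proof.
  apply pbij_ext. intros [x nx] y. simpl. unfold wp_rel; simpl. split; [| intros []].
  intros [H _]. rewrite inv_zero, !zero_l in H. auto.
Qed.

Lemma wp_hom : homomorphism S (SymInv point) wp.
Proof. split; [apply wp_mul | apply wp_zero]. Qed.

Lemma wp_idemE e (x y : point) : idempotent e ->
  wp e x y <-> e ** proj1_sig x = proj1_sig x /\ y = x.
Proof.
  intro He. simpl. unfold wp_rel. rewrite (idem_inv e He), He. split.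
  - intros [H1 H2]. split; auto. apply point_eq. congruence.
  - intros [H1 ->]. auto.
Qed.
End WagnerPreston.

(** * Boolean inverse semigroups *)

Existing Class boolean_inverse_semigroup.

Section BooleanInverseSemigroup.
Context {B : InvSemigroup0}.
Implicit Types a b c e f g j k p q r s t w x y z : B.
Implicit Types L M : list B.

Definition is_join a b j : Prop := is_lub_in anyS a b j.

Definition join a b : B :=
  match excluded_middle_informative (exists j, is_join a b j) with
  | left H => proj1_sig (constructive_indefinite_description _ H)
  | right _ => zero
  end.

Lemma join_spec a b j : is_join a b j -> is_join a b (join a b).
Proof.
  intro H. unfold join. destruct excluded_middle_informative as [H' | H'].
  - apply proj2_sig.
  - exfalso. eauto.
Qed.

Lemma is_join_eq a b j : is_join a b j -> j = join a b.
Proof. intro H. apply (is_lub_in_unique anyS a b); [| apply (join_spec a b j)]; auto. Qed.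

Lemma is_join_le_l a b j : is_join a b j -> a ≤ j.
Proof. intros [_ [H _]]; auto. Qed.
Lemma is_join_le_r a b j : is_join a b j -> b ≤ j.
Proof. intros [_ [_ [H _]]]; auto. Qed.
Lemma is_join_least a b j k : is_join a b j -> a ≤ k -> b ≤ k -> j ≤ k.
Proof. intros [_ [_ [_ H]]] ? ?. apply H; auto. exact I. Qed.

Lemma is_join_compatible a b j : is_join a b j -> compatible a b.
Proof.
  intro H. apply compatible_of_nat_le with j; [eapply is_join_le_l | eapply is_join_le_r]; eauto.
Qed.

Lemma is_join_sym a b j : is_join a b j -> is_join b a j.
Proof.
  intros [A [C [D E]]]. refine (conj A (conj D (conj C _))). intros k Hk H1 H2. apply E; auto.
Qed.

Lemma is_join_of_le a b : b ≤ a -> is_join a b a.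
Proof. intro H. split; [exact I | split; [apply nat_le_refl | split; auto]]. Qed.

Lemma join_absorb a b : b ≤ a -> join a b = a.
Proof. intro H. symmetry. apply is_join_eq, is_join_of_le; auto. Qed.

Lemma join_zero_r a : join a zero = a.
Proof. apply join_absorb, nat_le_zero. Qed.

Context {HB : boolean_inverse_semigroup B}.

Lemma join_is_join a b : compatible a b -> is_join a b (join a b).
Proof. intro H. destruct (proj1 HB a b H) as [j Hj]. apply (join_spec a b j Hj). Qed.

Lemma join_comm a b : compatible a b -> join a b = join b a.
Proof. intro H. apply is_join_eq, is_join_sym, join_is_join; auto. Qed.

Lemma le_join_l a b : compatible a b -> a ≤ join a b.
Proof. intro H. eapply is_join_le_l, join_is_join; auto. Qed.
Lemma le_join_r a b : compatible a b -> b ≤ join a b.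
Proof. intro H. eapply is_join_le_r, join_is_join; auto. Qed.
Lemma join_le a b k : compatible a b -> a ≤ k -> b ≤ k -> join a b ≤ k.
Proof. intros H ? ?. apply (is_join_least a b); auto. apply join_is_join; auto. Qed.

Lemma join_mul_l s a b : compatible a b -> s ** join a b = join (s ** a) (s ** b).
Proof. intro H. apply is_join_eq. apply (proj1 (proj2 HB) a b _ s H (join_is_join a b H)). Qed.
Lemma join_mul_r s a b : compatible a b -> join a b ** s = join (a ** s) (b ** s).
Proof. intro H. apply is_join_eq. apply (proj1 (proj2 HB) a b _ s H (join_is_join a b H)). Qed.

Lemma compatible_mul_r s a b : compatible a b -> compatible (a ** s) (b ** s).
Proof.
  intro H. apply compatible_of_nat_le with (join a b ** s);
    apply nat_le_mul_r; [apply le_join_l | apply le_join_r]; auto.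
Qed.

Lemma join_idem e f : idempotent e -> idempotent f -> idempotent (join e f).
Proof.
  intros He Hf. pose proof (compatible_idem e f He Hf) as Hc.
  assert (E1 : e ** join e f = e).
  { rewrite join_mul_l, He; auto. apply join_absorb, nat_le_mul_idem_r; auto. }
  assert (E2 : f ** join e f = f).
  { rewrite join_mul_l, Hf, join_comm; auto.
    - apply join_absorb, nat_le_mul_idem_r; auto.
    - apply compatible_of_nat_le with f; [apply nat_le_mul_idem_r; auto | apply nat_le_refl]. }
  unfold idempotent. rewrite join_mul_r at 1; auto. rewrite E1, E2. auto.
Qed.

Lemma join_inv a b : compatible a b -> (join a b)⁻¹ = join a⁻¹ b⁻¹.
Proof.
  intro H. apply is_join_eq. split; [exact I | split; [| split]].
  - apply nat_le_inv, le_join_l; auto.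
  - apply nat_le_inv, le_join_r; auto.
  - intros k _ H1 H2. apply nat_le_inv in H1, H2. rewrite inv_inv in H1, H2.
    rewrite <- (inv_inv k). apply nat_le_inv, join_le; auto.
Qed.

Lemma is_join_idem_intro a b x : idempotent a -> idempotent b ->
  a ≤ x -> b ≤ x -> x ≤ join a b -> is_join a b x.
Proof.
  intros Ha Hb H1 H2 H3. pose proof (compatible_idem a b Ha Hb) as Hc.
  replace x with (join a b); [apply join_is_join; auto |].
  apply nat_le_antisym; auto. apply join_le; auto.
Qed.

Lemma le_join_of_le_l a b c : idempotent b -> idempotent c -> a ≤ b -> a ≤ join b c.
Proof. intros Hb Hc H. eapply nat_le_trans; [exact H | apply le_join_l, compatible_idem; auto]. Qed.

Lemma le_join_of_le_r a b c : idempotent b -> idempotent c -> a ≤ c -> a ≤ join b c.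
Proof. intros Hb Hc H. eapply nat_le_trans; [exact H | apply le_join_r, compatible_idem; auto]. Qed.

Definition joins L : B := fold_right join zero L.

Definition bounded L w : Prop := forall p, In p L -> p ≤ w.

Lemma bounded_cons p L w : bounded (p :: L) w <-> p ≤ w /\ bounded L w.
Proof.
  split.
  - intro H. split; [apply H; left | intros q Hq; apply H; right]; auto.
  - intros [H1 H2] q [<- | Hq]; auto.
Qed.

Lemma bounded_app L M w : bounded (L ++ M) w <-> bounded L w /\ bounded M w.
Proof.
  split.
  - intro H. split; intros q Hq; apply H, in_or_app; auto.
  - intros [H1 H2] q Hq. apply in_app_or in Hq. destruct Hq; auto.
Qed.

Lemma bounded_trans L w w' : bounded L w -> w ≤ w' -> bounded L w'.
Proof. intros H H' q Hq. eapply nat_le_trans; eauto. Qed.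

Lemma bounded_map_mul_l s L w : bounded L w -> bounded (map (mul s) L) (s ** w).
Proof.
  intros H q Hq. apply in_map_iff in Hq. destruct Hq as [p [<- Hp]]. apply nat_le_mul_l; auto.
Qed.

Lemma bounded_map_inv L w : bounded L w -> bounded (map inv L) w⁻¹.
Proof.
  intros H q Hq. apply in_map_iff in Hq. destruct Hq as [p [<- Hp]]. apply nat_le_inv; auto.
Qed.

Lemma joins_lub L w : bounded L w -> bounded L (joins L) /\ forall k, bounded L k -> joins L ≤ k.
Proof.
  induction L as [| p L IH]; intros Hb.
  - split; [intros ? [] | intros k _; apply nat_le_zero].
  - apply bounded_cons in Hb. destruct Hb as [Hp Hb]. destruct (IH Hb) as [IH1 IH2].
    assert (Hc : compatible p (joins L)) by (apply compatible_of_nat_le with w; auto).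
    simpl. split.
    + apply bounded_cons. split; [apply le_join_l; auto |].
      apply bounded_trans with (joins L); auto. apply le_join_r; auto.
    + intros k Hk. apply bounded_cons in Hk. destruct Hk. apply join_le; auto.
Qed.

Lemma le_joins L w p : bounded L w -> In p L -> p ≤ joins L.
Proof. intros H Hp. apply (joins_lub L w H). auto. Qed.

Lemma joins_le L k : bounded L k -> joins L ≤ k.
Proof. intro H. apply (joins_lub L k H). auto. Qed.

Lemma joins_app L M w : bounded (L ++ M) w -> joins (L ++ M) = join (joins L) (joins M).
Proof.
  intro H. pose proof H as H'. apply bounded_app in H'. destruct H' as [H1 H2].
  assert (Hc : compatible (joins L) (joins M))
    by (apply compatible_of_nat_le with w; apply joins_le; auto).
  apply nat_le_antisym.
  - apply joins_le. apply bounded_app. split.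
    + apply bounded_trans with (joins L); [apply (joins_lub L w) | apply le_join_l]; auto.
    + apply bounded_trans with (joins M); [apply (joins_lub M w) | apply le_join_r]; auto.
  - pose proof (joins_lub (L ++ M) w H) as [Hj _]. apply bounded_app in Hj.
    apply join_le; auto; apply joins_le; tauto.
Qed.

Lemma joins_mul_l s L w : bounded L w -> s ** joins L = joins (map (mul s) L).
Proof.
  induction L as [| p L IH]; intros Hb; [apply zero_r |].
  apply bounded_cons in Hb. destruct Hb as [H1 H2]. simpl.
  rewrite join_mul_l, IH; auto. apply compatible_of_nat_le with w; auto. apply joins_le; auto.
Qed.

Lemma joins_mul_r s L w : bounded L w -> joins L ** s = joins (map (fun p => p ** s) L).
Proof.
  induction L as [| p L IH]; intros Hb; [apply zero_l |].
  apply bounded_cons in Hb. destruct Hb as [H1 H2]. simpl.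
  rewrite join_mul_r, IH; auto. apply compatible_of_nat_le with w; auto. apply joins_le; auto.
Qed.

Lemma joins_inv L w : bounded L w -> (joins L)⁻¹ = joins (map inv L).
Proof.
  induction L as [| p L IH]; intros Hb; [apply inv_zero |].
  apply bounded_cons in Hb. destruct Hb as [H1 H2]. simpl.
  rewrite join_inv, IH; auto. apply compatible_of_nat_le with w; auto. apply joins_le; auto.
Qed.

Lemma joins_idem L : (forall p, In p L -> idempotent p) ->
  idempotent (joins L) /\ bounded L (joins L).
Proof.
  induction L as [| p L IH]; intros HL.
  - split; [apply idem_zero | intros ? []].
  - assert (Hp : idempotent p) by (apply HL; left; auto).
    destruct IH as [Hi Hb]; [intros q Hq; apply HL; right; auto |].
    assert (Hc : compatible p (joins L)) by (apply compatible_idem; auto).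
    simpl. split; [apply join_idem; auto |]. apply bounded_cons. split; [apply le_join_l; auto |].
    apply bounded_trans with (joins L); auto. apply le_join_r; auto.
Qed.

Definition diff_spec x k g : Prop :=
  idempotent g /\ g ≤ x /\ g ** k = zero /\ is_join g (x ** k) x.

Definition diff x k : B :=
  match excluded_middle_informative (exists g, diff_spec x k g) with
  | left H => proj1_sig (constructive_indefinite_description _ H)
  | right _ => zero
  end.

Lemma diff_spec_exists x k : idempotent x -> idempotent k -> exists g, diff_spec x k g.
Proof.
  intros Hx Hk. destruct HB as [_ [_ [_ [_ [_ [_ Hcompl]]]]]].
  assert (Hxk : idempotent (x ** k)) by (apply idem_mul; auto).
  destruct (Hcompl x (x ** k) Hx Hxk (nat_le_mul_idem_r _ _ Hk)) as [g [Hg [Hgx [Hglb Hlub]]]].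
  exists g. split; [auto | split; [auto | split]].
  - pose proof (is_glb_in_unique _ _ _ _ _ Hglb (is_glb_in_idem_mul _ _ Hxk Hg)) as E.
    rewrite E, (idem_nat_le_mul_l g x Hx Hgx) at 1. rassoc. f_equal. apply idem_comm; auto.
  - assert (Hc : compatible (x ** k) g) by (apply compatible_idem; auto).
    apply is_join_sym. replace x with (join (x ** k) g) at 2; [apply join_is_join; auto |].
    apply (is_lub_in_unique idempotent (x ** k) g); auto.
    destruct (join_is_join _ _ Hc) as [_ [J1 [J2 J3]]].
    split; [apply join_idem; auto | split; [auto | split; [auto |]]].
    intros k' _ H1 H2. apply J3; auto. exact I.
Qed.

Lemma diff_is_spec x k : idempotent x -> idempotent k -> diff_spec x k (diff x k).
Proof.
  intros Hx Hk. unfold diff. destruct excluded_middle_informative as [H | H].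
  - apply proj2_sig.
  - exfalso. apply H, diff_spec_exists; auto.
Qed.

Section DiffSpec.
Variables x k : B.
Hypotheses (Hx : idempotent x) (Hk : idempotent k).

Lemma diff_idem : idempotent (diff x k).
Proof. apply (diff_is_spec x k Hx Hk). Qed.
Lemma diff_le : diff x k ≤ x.
Proof. apply (diff_is_spec x k Hx Hk). Qed.
Lemma diff_mul_zero : diff x k ** k = zero.
Proof. apply (diff_is_spec x k Hx Hk). Qed.
Lemma diff_is_join : is_join (diff x k) (x ** k) x.
Proof. apply (diff_is_spec x k Hx Hk). Qed.
Lemma join_diff : join (diff x k) (x ** k) = x.
Proof. symmetry. apply is_join_eq, diff_is_join. Qed.

(* Both candidates are below x = g' ∨ xk, and g kills xk, so g = g g'. *)
Lemma diff_spec_unique g : diff_spec x k g -> g = diff x k.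
Proof.
  assert (Hmul : forall g g', diff_spec x k g -> diff_spec x k g' -> g = g ** g').
  { intros g0 g' [Hg [Hgx [Hgk _]]] [Hg' [_ [_ Hgj']]].
    rewrite (idem_nat_le_mul_r g0 x Hx Hgx) at 1. rewrite (is_join_eq _ _ _ Hgj').
    rewrite join_mul_l; [| eapply is_join_compatible; eauto].
    rewrite mulA, <- (idem_nat_le_mul_r g0 x Hx Hgx), Hgk. apply join_zero_r. }
  intro Hs. pose proof (diff_is_spec x k Hx Hk) as Hd.
  rewrite (Hmul g (diff x k)); auto. rewrite (Hmul (diff x k) g) at 2; auto.
  apply idem_comm; [apply Hs | apply Hd].
Qed.
End DiffSpec.

Local Hint Resolve idem_mul idem_zero idem_inv_mul idem_mul_inv join_idem compatible_idem
  diff_idem : idem.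

Lemma diff_eq_intro x k g : idempotent x -> idempotent k -> idempotent g ->
  g ≤ x -> g ** k = zero -> x ≤ join g (x ** k) -> diff x k = g.
Proof.
  intros Hx Hk Hg Hgx Hgk Hle. symmetry. apply diff_spec_unique; auto.
  split; [auto | split; [auto | split; [auto |]]].
  apply is_join_idem_intro; auto with idem. apply nat_le_mul_idem_r; auto.
Qed.

Lemma diff_zero_r x : idempotent x -> diff x zero = x.
Proof.
  intro Hx. apply diff_eq_intro; auto with idem; [apply nat_le_refl | apply zero_r |].
  rewrite zero_r, join_zero_r. apply nat_le_refl.
Qed.

Lemma diff_zero_l z : idempotent z -> diff zero z = zero.
Proof.
  intro Hz. apply diff_eq_intro; auto with idem;
    [apply nat_le_refl | apply zero_l | apply nat_le_zero].
Qed.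

Lemma diff_mul_r x k y : idempotent x -> idempotent k -> idempotent y ->
  diff x k ** y = diff (x ** y) k.
Proof.
  intros Hx Hk Hy. symmetry. apply diff_eq_intro; auto with idem.
  - apply nat_le_mul_r, diff_le; auto.
  - rewrite <- mulA, (idem_comm y k Hy Hk), mulA, diff_mul_zero; auto. apply zero_l.
  - rewrite <- (join_diff x k) at 1; auto. rewrite join_mul_r; auto with idem.
    rewrite <- (mulA x k y), (idem_comm k y), (mulA x y k); auto. apply nat_le_refl.
Qed.

Lemma diff_conj x k t : idempotent x -> idempotent k ->
  t⁻¹ ** diff x k ** t = diff (t⁻¹ ** x ** t) (t⁻¹ ** k ** t).
Proof.
  intros Hx Hk. symmetry. apply diff_eq_intro; try apply idem_conj_inv; auto with idem.
  - apply nat_le_mul_r, nat_le_mul_l, diff_le; auto.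
  - rewrite conj_mul_conj, diff_mul_zero, zero_r; auto with idem. apply zero_l.
  - rewrite conj_mul_conj, <- (join_diff x k) at 1; auto.
    rewrite <- (mulA t⁻¹), join_mul_r, join_mul_l; auto using compatible_mul_r with idem.
    rassoc. apply nat_le_refl.
Qed.

Lemma diff_join_l x y z : idempotent x -> idempotent y -> idempotent z ->
  diff (join x y) z = join (diff x z) (diff y z).
Proof.
  intros Hx Hy Hz. apply diff_eq_intro; auto with idem.
  - apply join_le; auto with idem;
      [apply le_join_of_le_l | apply le_join_of_le_r]; auto with idem; apply diff_le; auto.
  - rewrite join_mul_r, !diff_mul_zero; auto with idem. apply join_zero_r.
  - rewrite join_mul_r; auto with idem. apply join_le; auto with idem.
    + rewrite <- (join_diff x z) at 1; auto. apply join_le; auto with idem.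
      * apply le_join_of_le_l, le_join_of_le_l; auto with idem. apply nat_le_refl.
      * apply le_join_of_le_r, le_join_of_le_l; auto with idem. apply nat_le_refl.
    + rewrite <- (join_diff y z) at 1; auto. apply join_le; auto with idem.
      * apply le_join_of_le_l, le_join_of_le_r; auto with idem. apply nat_le_refl.
      * apply le_join_of_le_r, le_join_of_le_r; auto with idem. apply nat_le_refl.
Qed.

Lemma diff_join_r x y w : idempotent x -> idempotent y -> idempotent w ->
  diff x (join y w) = diff (diff x y) w.
Proof.
  intros Hx Hy Hw. set (r := diff (diff x y) w).
  assert (Hr : idempotent r) by (unfold r; auto with idem).
  assert (Hrxy : r ≤ diff x y) by (unfold r; apply diff_le; auto with idem).
  apply diff_eq_intro; auto with idem.
  - apply nat_le_trans with (diff x y); auto. apply diff_le; auto.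
  - rewrite join_mul_l; auto with idem. unfold r at 2. rewrite diff_mul_zero; auto with idem.
    rewrite (idem_nat_le_mul_r r (diff x y)), <- mulA, diff_mul_zero, zero_r; auto with idem.
    apply join_zero_r.
  - assert (Hxw : x ** join y w ≤ join r (x ** join y w))
      by (apply le_join_of_le_r; auto with idem; apply nat_le_refl).
    rewrite <- (join_diff x y) at 1; auto. apply join_le; auto with idem.
    + rewrite <- (join_diff (diff x y) w); auto with idem. fold r. apply join_le; auto with idem.
      * apply le_join_of_le_l; auto with idem. apply nat_le_refl.
      * eapply nat_le_trans; [| exact Hxw].
        apply nat_le_mul; [apply diff_le | apply le_join_r]; auto with idem.
    + eapply nat_le_trans; [| exact Hxw]. apply nat_le_mul_l, le_join_l; auto with idem.
Qed.

Lemma diff_diff_r x y k : idempotent x -> idempotent y -> idempotent k ->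
  diff x (diff y k) = join (diff x y) (x ** y ** k).
Proof.
  intros Hx Hy Hk. apply diff_eq_intro; auto with idem.
  - apply join_le; auto with idem; [apply diff_le; auto |].
    apply nat_le_trans with (x ** y); apply nat_le_mul_idem_r; auto with idem.
  - rewrite join_mul_r; auto with idem.
    rewrite (idem_nat_le_mul_l (diff y k) y), mulA, diff_mul_zero, zero_l; auto with idem;
      [| apply diff_le; auto].
    rewrite <- (idem_nat_le_mul_l (diff y k) y) by (auto; apply diff_le; auto).
    rewrite <- (mulA (x ** y) k), (idem_comm k (diff y k)), diff_mul_zero, zero_r; auto with idem.
    apply join_zero_r.
  - rewrite <- (join_diff x y) at 1; auto. apply join_le; auto with idem.
    + apply le_join_of_le_l, le_join_of_le_l; auto with idem. apply nat_le_refl.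
    + rewrite <- (join_diff y k) at 1; auto. rewrite join_mul_l; auto with idem.
      apply join_le; auto with idem.
      * apply le_join_of_le_r; auto with idem. apply nat_le_refl.
      * apply le_join_of_le_l, le_join_of_le_r; auto with idem. rewrite mulA. apply nat_le_refl.
Qed.

Lemma diff_joins_l L z : (forall p, In p L -> idempotent p) -> idempotent z ->
  diff (joins L) z = joins (map (fun p => diff p z) L).
Proof.
  induction L as [|p L IH]; intros HL Hz.
  - apply diff_zero_l; auto.
  - simpl. assert (Hp : idempotent p) by (apply HL; left; auto).
    assert (HL' : (forall p, In p L -> idempotent p)) by (intros q Hq; apply HL; right; auto).
    rewrite diff_join_l; auto. rewrite IH; auto. apply (proj1 (joins_idem L HL')).
Qed.

Lemma joins_concat LL w : (forall L, In L LL -> bounded L w) ->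
  joins (concat LL) = joins (map joins LL).
Proof.
  induction LL as [| L LL IH]; intros H; auto. simpl.
  rewrite (joins_app L (concat LL) w).
  - rewrite IH; auto. intros M HM. apply H. right; auto.
  - apply bounded_app. split; [apply H; left; auto |].
    intros q Hq. apply in_concat in Hq. destruct Hq as [M [HM Hq]]. apply (H M); [right |]; auto.
Qed.

Definition mul_lists L M : list B := concat (map (fun p => map (mul p) M) L).

Lemma in_mul_lists L M q : In q (mul_lists L M) -> exists p r, In p L /\ In r M /\ q = p ** r.
Proof.
  unfold mul_lists. intro H. apply in_concat in H. destruct H as [N [HN Hq]].
  apply in_map_iff in HN. destruct HN as [p [<- Hp]]. apply in_map_iff in Hq.
  destruct Hq as [r [<- Hr]]. exists p, r. auto.
Qed.

Lemma bounded_mul_lists L M w w' : bounded L w -> bounded M w' -> bounded (mul_lists L M) (w ** w').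
Proof.
  intros H1 H2 q Hq. apply in_mul_lists in Hq. destruct Hq as [p [r [Hp [Hr ->]]]].
  apply nat_le_mul; auto.
Qed.

Lemma joins_mul L M w w' : bounded L w -> bounded M w' ->
  joins L ** joins M = joins (mul_lists L M).
Proof.
  intros H1 H2. rewrite (joins_mul_r (joins M) L w H1).
  rewrite map_ext_in with (g := fun p => joins (map (mul p) M))
    by (intros p _; apply (joins_mul_l p M w' H2)).
  unfold mul_lists. rewrite (joins_concat _ (w ** w')), map_map; auto.
  intros N HN. apply in_map_iff in HN. destruct HN as [p [<- Hp]].
  eapply bounded_trans; [apply (bounded_map_mul_l p M w' H2) | apply nat_le_mul_r; auto].
Qed.

Definition join_of (Q : B -> Prop) x : Prop :=
  exists L, (forall p, In p L -> Q p) /\ bounded L x /\ x = joins L.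

Section JoinOf.
Variable Q : B -> Prop.

Lemma join_of_zero : join_of Q zero.
Proof. exists []. split; [intros ? [] | split; [intros ? [] | reflexivity]]. Qed.

Lemma join_of_single p : Q p -> join_of Q p.
Proof.
  intro Hp. exists [p]. split; [intros q [<- | []]; auto | split].
  - intros q [<- | []]. apply nat_le_refl.
  - symmetry. apply join_zero_r.
Qed.

Lemma join_of_joins_idem L : (forall p, In p L -> Q p) -> (forall p, In p L -> idempotent p) ->
  join_of Q (joins L).
Proof. intros HQ HL. exists L. split; [auto | split; [apply joins_idem; auto | reflexivity]]. Qed.

Lemma join_of_join x y : join_of Q x -> join_of Q y -> compatible x y -> join_of Q (join x y).
Proof.
  intros [L [HL [Hb Ex]]] [M [HM [Hb' Ey]]] Hc. exists (L ++ M).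
  assert (Hbb : bounded (L ++ M) (join x y)).
  { apply bounded_app.
    split; eapply bounded_trans; eauto; [apply le_join_l | apply le_join_r]; auto. }
  split; [| split; auto].
  - intros p Hp. apply in_app_or in Hp. destruct Hp; auto.
  - rewrite (joins_app L M (join x y)), <- Ex, <- Ey; auto.
Qed.

Lemma join_of_mul x y : (forall p q, Q p -> Q q -> Q (p ** q)) ->
  join_of Q x -> join_of Q y -> join_of Q (x ** y).
Proof.
  intros HQ [L [HL [Hb ->]]] [M [HM [Hb' ->]]]. exists (mul_lists L M). split; [| split].
  - intros q Hq. apply in_mul_lists in Hq. destruct Hq as [p [r [Hp [Hr ->]]]]. auto.
  - apply bounded_mul_lists; auto.
  - apply joins_mul with (joins L) (joins M); auto.
Qed.

Lemma join_of_inv x : (forall p, Q p -> Q p⁻¹) -> join_of Q x -> join_of Q x⁻¹.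
Proof.
  intros HQ [L [HL [Hb ->]]]. exists (map inv L). split; [| split].
  - intros q Hq. apply in_map_iff in Hq. destruct Hq as [p [<- Hp]]. auto.
  - apply bounded_map_inv; auto.
  - apply (joins_inv L (joins L)); auto.
Qed.
End JoinOf.

Lemma join_of_mono (Q Q' : B -> Prop) x : (forall p, Q p -> Q' p) -> join_of Q x -> join_of Q' x.
Proof. intros H [L [HL HL']]. exists L. split; auto. Qed.

Local Notation is_meet := (is_glb_in anyS).

Lemma is_meet_sym u w m : is_meet u w m -> is_meet w u m.
Proof.
  intros [A [C [D E]]]. refine (conj A (conj D (conj C _))). intros k Hk H1 H2. apply E; auto.
Qed.

Lemma is_meet_restrict u w m u' : is_meet u w m -> u' ≤ u -> is_meet u' w (m ** (u'⁻¹ ** u')).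
Proof.
  intros [_ [Hmu [Hmw Hm]]] Hu. split; [exact I | split; [| split]].
  - apply nat_le_trans with (u ** (u'⁻¹ ** u')); [apply nat_le_mul_r; auto |].
    rewrite <- (proj1 (nat_leE _ _) Hu). apply nat_le_refl.
  - eapply nat_le_trans; [apply nat_le_mul_idem_r, idem_inv_mul | auto].
  - intros z _ H1 H2.
    assert (Hzm : z ≤ m) by (apply Hm; [exact I | apply nat_le_trans with u' |]; auto).
    apply nat_leE in Hzm. apply nat_le_inv_mul, idem_nat_le_mul_r in H1; [| apply idem_inv_mul].
    exists (z⁻¹ ** z). split; [apply idem_inv_mul |].
    rewrite Hzm at 1. rewrite H1 at 1. rewrite mulA, <- (mulA m),
      (idem_comm (z⁻¹ ** z) (u'⁻¹ ** u')), mulA; auto; apply idem_inv_mul.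
Qed.

Lemma is_meet_join u1 u2 w m1 m2 : compatible u1 u2 -> is_meet u1 w m1 -> is_meet u2 w m2 ->
  is_meet (join u1 u2) w (join m1 m2).
Proof.
  intros Hc [_ [H1u [H1w H1]]] [_ [H2u [H2w H2]]].
  assert (Hc' : compatible m1 m2) by (apply compatible_of_nat_le with w; auto).
  split; [exact I | split; [| split]].
  - apply join_le; auto.
    + apply nat_le_trans with u1; [| apply le_join_l]; auto.
    + apply nat_le_trans with u2; [| apply le_join_r]; auto.
  - apply join_le; auto.
  - intros z _ Hz1 Hz2. pose proof Hz1 as E. apply nat_leE in E. rewrite E, join_mul_r; auto.
    assert (Hzd : forall u, u ≤ join u1 u2 -> u ** (z⁻¹ ** z) ≤ z).
    { intros u Hu.
      eapply nat_le_trans; [apply nat_le_mul_r, Hu | rewrite <- E; apply nat_le_refl]. }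
    apply join_le; [apply compatible_mul_r; auto | |].
    + eapply nat_le_trans; [| apply le_join_l; auto]. apply H1; [exact I | |].
      * apply nat_le_mul_idem_r, idem_inv_mul.
      * apply nat_le_trans with z; auto. apply Hzd, le_join_l; auto.
    + eapply nat_le_trans; [| apply le_join_r; auto]. apply H2; [exact I | |].
      * apply nat_le_mul_idem_r, idem_inv_mul.
      * apply nat_le_trans with z; auto. apply Hzd, le_join_r; auto.
Qed.

Lemma is_meet_zero w : is_meet zero w zero.
Proof.
  split; [exact I | split; [apply nat_le_refl | split; [apply nat_le_zero | auto]]].
Qed.

Lemma is_meet_joins L b w : bounded L b -> (forall p, In p L -> exists m, is_meet p w m) ->
  exists m, is_meet (joins L) w m.
Proof.
  induction L as [| p L IH]; intros Hb H.
  - exists zero. apply is_meet_zero.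
  - apply bounded_cons in Hb. destruct Hb as [Hp Hb].
    destruct IH as [m2 Hm2]; [auto | intros q Hq; apply H; right; auto |].
    destruct (H p (or_introl eq_refl)) as [m1 Hm1].
    exists (join m1 m2). apply is_meet_join; auto.
    apply compatible_of_nat_le with b; auto. apply joins_le; auto.
Qed.

(* Meets of generators descend to elements below them and then ascend along finite joins. *)
Lemma wedge_of_generators (G : B -> Prop) :
  (forall x, join_of (fun p => exists g, G g /\ p ≤ g) x) ->
  (forall g g', G g -> G g' -> exists m, is_meet g g' m) ->
  wedge_semigroup B.
Proof.
  intros Hgen Hmeet.
  assert (Hmeet_r : forall x g', G g' -> exists m, is_meet x g' m).
  { intros x g' Hg'. destruct (Hgen x) as [L [HL [Hb ->]]].
    apply is_meet_joins with (joins L); auto. intros p Hp. destruct (HL p Hp) as [g [Hg Hpg]].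
    destruct (Hmeet g g' Hg Hg') as [m Hm]. eexists. apply is_meet_restrict with (u := g); eauto. }
  intros x y. destruct (Hgen y) as [L [HL [Hb ->]]].
  destruct (is_meet_joins L (joins L) x) as [m Hm]; auto.
  - intros p Hp. destruct (HL p Hp) as [g [Hg Hpg]]. destruct (Hmeet_r x g Hg) as [m Hm].
    eexists. apply is_meet_restrict with (u := g); eauto. apply is_meet_sym; eauto.
  - exists m. apply is_meet_sym; auto.
Qed.
End BooleanInverseSemigroup.

(** * Generation and normal forms in the Booleanization *)

Section Generation.
Context {S B : InvSemigroup0} (beta : S -> B).
Hypothesis Hbool : is_booleanization S B beta.
Let HB : boolean_inverse_semigroup B := proj1 Hbool.
#[local] Existing Instance HB.

Variable P : B -> Prop.
Hypothesis P_beta : forall s, P (beta s).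
Hypothesis P_zero : P zero.
Hypothesis P_mul : forall x y, P x -> P y -> P (x ** y).
Hypothesis P_inv : forall x, P x -> P x⁻¹.
Hypothesis P_join : forall x y, P x -> P y -> compatible x y -> P (join x y).
Hypothesis P_diff : forall x k, P x -> P k -> idempotent x -> idempotent k -> P (diff x k).

Definition sub : Type := {x : B | P x}.
Definition sub_val (a : sub) : B := proj1_sig a.

Lemma sub_eq (a b : sub) : sub_val a = sub_val b -> a = b.
Proof. destruct a, b; unfold sub_val; simpl. intros ->. f_equal. apply proof_irrelevance. Qed.

Definition sub_mul (a b : sub) : sub :=
  exist _ (sub_val a ** sub_val b) (P_mul _ _ (proj2_sig a) (proj2_sig b)).
Definition sub_inv (a : sub) : sub := exist _ (sub_val a)⁻¹ (P_inv _ (proj2_sig a)).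
Definition sub_zero : sub := exist _ zero P_zero.

Lemma sub_mulA a b c : sub_mul a (sub_mul b c) = sub_mul (sub_mul a b) c.
Proof. apply sub_eq, mulA. Qed.
Lemma sub_inv_l a : sub_mul (sub_mul a (sub_inv a)) a = a.
Proof. apply sub_eq, inv_l. Qed.
Lemma sub_inv_r a : sub_mul (sub_mul (sub_inv a) a) (sub_inv a) = sub_inv a.
Proof. apply sub_eq, inv_r. Qed.
Lemma sub_inv_uniq a b : sub_mul (sub_mul a b) a = a -> sub_mul (sub_mul b a) b = b ->
  b = sub_inv a.
Proof.
  intros H1 H2. apply sub_eq, inv_uniq; [apply (f_equal sub_val H1) | apply (f_equal sub_val H2)].
Qed.
Lemma sub_zero_l a : sub_mul sub_zero a = sub_zero.
Proof. apply sub_eq, zero_l. Qed.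
Lemma sub_zero_r a : sub_mul a sub_zero = sub_zero.
Proof. apply sub_eq, zero_r. Qed.

Definition SubInv : InvSemigroup0 :=
  {| carrier := sub; mul := sub_mul; inv := sub_inv; zero := sub_zero;
     mulA := sub_mulA; inv_l := sub_inv_l; inv_r := sub_inv_r; inv_uniq := sub_inv_uniq;
     zero_l := sub_zero_l; zero_r := sub_zero_r |}.

Implicit Types a b e f j : SubInv.

Lemma sub_idemE a : idempotent a <-> idempotent (sub_val a).
Proof. split; intro H; [apply (f_equal sub_val H) | apply sub_eq, H]. Qed.

Lemma sub_nat_leE a b : a ≤ b <-> sub_val a ≤ sub_val b.
Proof.
  split.
  - intros [e [He ->]]. exists (sub_val e). split; [apply sub_idemE |]; auto.
  - intros H. exists (a⁻¹ ** a). split.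
    + apply sub_idemE, idem_inv_mul.
    + apply sub_eq, nat_leE, H.
Qed.

Lemma sub_compatibleE a b : compatible a b <-> compatible (sub_val a) (sub_val b).
Proof. unfold compatible. rewrite !sub_idemE. reflexivity. Qed.

Lemma sub_is_lub_in (Q : SubInv -> Prop) a b j : Q j ->
  is_join (sub_val a) (sub_val b) (sub_val j) -> is_lub_in Q a b j.
Proof.
  intros HQ [_ [H1 [H2 H3]]]. split; [auto |]. rewrite !sub_nat_leE.
  split; [auto | split; [auto |]]. intros k _ Ha Hb. rewrite sub_nat_leE in *. apply H3; auto.
  exact I.
Qed.

Definition sub_join a b (H : compatible (sub_val a) (sub_val b)) : SubInv :=
  exist _ (join (sub_val a) (sub_val b)) (P_join _ _ (proj2_sig a) (proj2_sig b) H).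

Lemma sub_join_is_join a b H : is_join a b (sub_join a b H).
Proof. apply sub_is_lub_in; [exact I |]. apply join_is_join; auto. Qed.

Lemma sub_is_joinE a b j : is_join a b j ->
  compatible (sub_val a) (sub_val b) /\ sub_val j = join (sub_val a) (sub_val b).
Proof.
  intro Hj. assert (Hc : compatible (sub_val a) (sub_val b)).
  { apply sub_compatibleE. eapply is_join_compatible; eauto. }
  split; [auto |]. rewrite (is_lub_in_unique _ _ _ _ _ Hj (sub_join_is_join a b Hc)). reflexivity.
Qed.

Lemma sub_join_idem e f H : idempotent e -> idempotent f ->
  is_lub_in idempotent e f (sub_join e f H).
Proof.
  rewrite !sub_idemE. intros He Hf. apply sub_is_lub_in.
  - apply sub_idemE, join_idem; auto.
  - apply join_is_join; auto.
Qed.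

Lemma sub_meet_idem e f m : idempotent e -> idempotent f ->
  is_glb_in idempotent e f m -> m = e ** f.
Proof. intros He Hf Hm. apply (is_glb_in_unique _ _ _ _ _ Hm), is_glb_in_idem_mul; auto. Qed.

Lemma sub_join_idemE e f j : idempotent e -> idempotent f ->
  is_lub_in idempotent e f j -> sub_val j = join (sub_val e) (sub_val f).
Proof.
  intros He Hf Hj.
  pose proof (compatible_idem _ _ (proj1 (sub_idemE e) He) (proj1 (sub_idemE f) Hf)) as Hc.
  rewrite (is_lub_in_unique _ _ _ _ _ Hj (sub_join_idem e f Hc He Hf)). reflexivity.
Qed.

Lemma sub_idem_distributive e f g j m1 m2 x :
  idempotent e -> idempotent f -> idempotent g ->
  is_lub_in idempotent f g j -> is_glb_in idempotent e f m1 -> is_glb_in idempotent e g m2 ->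
  is_glb_in idempotent e j x -> is_lub_in idempotent m1 m2 x.
Proof.
  intros He Hf Hg Hj Hm1 Hm2 Hx. assert (Hj' : idempotent j) by apply Hj.
  rewrite (sub_meet_idem _ _ _ He Hf Hm1), (sub_meet_idem _ _ _ He Hg Hm2),
    (sub_meet_idem _ _ _ He Hj' Hx).
  apply sub_is_lub_in; [apply idem_mul; auto |]. simpl.
  rewrite (sub_join_idemE f g j Hf Hg Hj). rewrite sub_idemE in He, Hf, Hg.
  rewrite join_mul_l; [| apply compatible_idem; auto].
  apply join_is_join, compatible_idem; apply idem_mul; auto.
Qed.

Lemma sub_idem_complement e f : idempotent e -> idempotent f -> f ≤ e ->
  exists g, idempotent g /\ g ≤ e /\ is_glb_in idempotent f g zero /\ is_lub_in idempotent f g e.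
Proof.
  rewrite !sub_idemE, sub_nat_leE. intros He Hf Hfe.
  set (g := exist P _ (P_diff _ _ (proj2_sig e) (proj2_sig f) He Hf) : SubInv).
  assert (Hg : idempotent (sub_val g)) by (apply diff_idem; auto).
  exists g. split; [apply sub_idemE; auto | split; [apply sub_nat_leE, diff_le; auto | split]].
  - replace (@zero SubInv) with (f ** g).
    + apply is_glb_in_idem_mul; apply sub_idemE; auto.
    + apply sub_eq. change (sub_val f ** sub_val g = zero).
      rewrite (idem_comm _ _ Hf Hg). apply diff_mul_zero; auto.
  - apply sub_is_lub_in; [apply sub_idemE; auto |]. apply is_join_sym.
    rewrite (idem_nat_le_mul_l (sub_val f) (sub_val e)) at 1; auto. apply diff_is_join; auto.
Qed.

Lemma sub_boolean : boolean_inverse_semigroup SubInv.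
Proof.
  split; [| split; [| split; [| split; [| split; [| split]]]]].
  - intros a b Hc. rewrite sub_compatibleE in Hc. exists (sub_join a b Hc).
    apply sub_join_is_join.
  - intros a b j s Hc Hj. destruct (sub_is_joinE a b j Hj) as [Hc' E].
    pose proof (join_is_join _ _ Hc') as J. rewrite <- E in J.
    destruct (proj1 (proj2 HB) _ _ _ (sub_val s) Hc' J) as [J1 J2].
    split; apply sub_is_lub_in; auto; exact I.
  - intros e f He Hf.
    pose proof (compatible_idem _ _ (proj1 (sub_idemE e) He) (proj1 (sub_idemE f) Hf)) as Hc.
    exists (sub_join e f Hc). apply sub_join_idem; auto.
  - intros e f He Hf. exists (e ** f). apply is_glb_in_idem_mul; auto.
  - split; [apply idem_zero | intros e _; apply nat_le_zero].
  - apply sub_idem_distributive.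
  - apply sub_idem_complement.
Qed.

Definition sub_beta (s : S) : SubInv := exist P (beta s) (P_beta s).

Lemma sub_beta_hom : homomorphism S SubInv sub_beta.
Proof.
  pose proof Hbool as [_ [[Hmul Hzero] _]].
  split; [intros a b |]; apply sub_eq; simpl; auto.
Qed.

Lemma morphism_sub_val (g : B -> SubInv) : morphism B SubInv g ->
  morphism B B (fun y => sub_val (g y)).
Proof.
  intros [[Hmul Hzero] Hjoin]. split; [split |].
  - intros a b. rewrite Hmul. reflexivity.
  - rewrite Hzero. reflexivity.
  - intros a b j Hc Hj. destruct (sub_is_joinE _ _ _ (Hjoin a b j Hc Hj)) as [Hc' ->].
    apply join_is_join; auto.
Qed.

Lemma morphism_id : morphism B B (fun y => y).
Proof. split; [split |]; auto. Qed.

(* The inclusion of the generated subsemigroup, composed with the morphism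
   B(S) -> SubInv given by the universal property, extends beta; by uniqueness
   it is the identity. *)
Theorem booleanization_generated x : P x.
Proof.
  pose proof Hbool as [_ [Hh [_ U]]].
  destruct (U SubInv sub_beta sub_boolean sub_beta_hom) as [[g [Hg Eg]] _].
  destruct (U B beta HB Hh) as [_ Uniq].
  replace x with (sub_val (g x)); [exact (proj2_sig (g x)) |].
  apply (Uniq _ _ (morphism_sub_val g Hg) morphism_id); auto.
  intros s. rewrite <- Eg. reflexivity.
Qed.
End Generation.

Section NormalForm.
Context {S B : InvSemigroup0} (beta : S -> B).
Hypothesis Hbool : is_booleanization S B beta.
Let HB : boolean_inverse_semigroup B := proj1 Hbool.
#[local] Existing Instance HB.
Let Hh : homomorphism S B beta := proj1 (proj2 Hbool).
Implicit Types (c e k s : S) (ks : list S) (p q x y : B).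

Local Hint Resolve idem_mul idem_zero idem_inv_mul idem_mul_inv join_idem compatible_idem
  diff_idem : idem.

Lemma beta_mul a b : beta (a ** b) = beta a ** beta b.
Proof. apply (hom_mul _ _ _ Hh). Qed.
Lemma beta_inv a : beta a⁻¹ = (beta a)⁻¹.
Proof. apply (hom_inv _ _ _ Hh). Qed.
Lemma beta_idem e : idempotent e -> idempotent (beta e).
Proof. apply (hom_idem _ _ _ Hh). Qed.
Local Hint Resolve beta_idem : idem.

Definition all_idem ks : Prop := forall k, In k ks -> idempotent k.

Lemma all_idem_cons k ks : all_idem (k :: ks) <-> idempotent k /\ all_idem ks.
Proof.
  split.
  - intro H. split; [apply H; left | intros k' Hk; apply H; right]; auto.
  - intros [H1 H2] k' [<- | Hk]; auto.
Qed.

Lemma all_idem_app ks ks' : all_idem (ks ++ ks') <-> all_idem ks /\ all_idem ks'.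
Proof.
  split.
  - intro H. split; intros k Hk; apply H, in_or_app; auto.
  - intros [H1 H2] k Hk. apply in_app_or in Hk. destruct Hk; auto.
Qed.

Definition conj_by c k : S := c⁻¹ ** k ** c.

Lemma all_idem_conj c ks : all_idem ks -> all_idem (map (conj_by c) ks).
Proof.
  intros H k Hk. apply in_map_iff in Hk. destruct Hk as [k' [<- Hk']]. apply idem_conj_inv; auto.
Qed.

Definition diffs x ks : B := fold_left (fun acc k => diff acc (beta k)) ks x.
Definition cell e ks : B := diffs (beta e) ks.

Lemma diffs_cons x k ks : diffs x (k :: ks) = diffs (diff x (beta k)) ks.
Proof. reflexivity. Qed.

Lemma diffs_app x ks ks' : diffs x (ks ++ ks') = diffs (diffs x ks) ks'.
Proof. apply fold_left_app. Qed.

Lemma diffs_idem_le x ks : idempotent x -> all_idem ks ->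
  idempotent (diffs x ks) /\ diffs x ks ≤ x.
Proof.
  revert x. induction ks as [| k ks IH]; intros x Hx Hks; [split; [auto | apply nat_le_refl] |].
  apply all_idem_cons in Hks. destruct Hks as [Hk Hks]. rewrite diffs_cons.
  destruct (IH (diff x (beta k))) as [H1 H2]; auto with idem.
  split; [auto | eapply nat_le_trans; [apply H2 | apply diff_le; auto with idem]].
Qed.

Lemma diffs_mul_r x ks y : idempotent x -> idempotent y -> all_idem ks ->
  diffs x ks ** y = diffs (x ** y) ks.
Proof.
  revert x. induction ks as [| k ks IH]; intros x Hx Hy Hks; auto.
  apply all_idem_cons in Hks. destruct Hks. rewrite !diffs_cons, IH, diff_mul_r; auto with idem.
Qed.

Lemma diffs_conj x ks c : idempotent x -> all_idem ks ->
  (beta c)⁻¹ ** diffs x ks ** beta c = diffs ((beta c)⁻¹ ** x ** beta c) (map (conj_by c) ks).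
Proof.
  revert x. induction ks as [| k ks IH]; intros x Hx Hks; auto.
  apply all_idem_cons in Hks. destruct Hks. simpl map. rewrite !diffs_cons, IH, diff_conj;
    auto with idem.
  unfold conj_by. rewrite !beta_mul, beta_inv. auto.
Qed.

Lemma cell_idem e ks : idempotent e -> all_idem ks -> idempotent (cell e ks).
Proof. intros. apply diffs_idem_le; auto with idem. Qed.
Lemma cell_le e ks : idempotent e -> all_idem ks -> cell e ks ≤ beta e.
Proof. intros. apply diffs_idem_le; auto with idem. Qed.
Local Hint Resolve cell_idem : idem.

Lemma cell_mul e ks e' ks' : idempotent e -> all_idem ks -> idempotent e' -> all_idem ks' ->
  cell e ks ** cell e' ks' = cell (e' ** e) (ks' ++ ks).
Proof.
  intros He Hks He' Hks'. unfold cell.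
  rewrite diffs_mul_r, (idem_comm (beta e)), diffs_mul_r, <- beta_mul, diffs_app;
    auto with idem; apply cell_idem; auto.
Qed.

Lemma cell_conj c e ks : idempotent e -> all_idem ks ->
  (beta c)⁻¹ ** cell e ks ** beta c = cell (conj_by c e) (map (conj_by c) ks).
Proof.
  intros He Hks. unfold cell. rewrite diffs_conj; auto with idem.
  unfold conj_by. rewrite !beta_mul, beta_inv. auto.
Qed.

Definition is_cell p : Prop := exists e ks, idempotent e /\ all_idem ks /\ p = cell e ks.
Definition monomial p : Prop :=
  exists c e ks, idempotent e /\ all_idem ks /\ p = beta c ** cell e ks.

Lemma monomial_beta s : monomial (beta s).
Proof.
  exists s, (s⁻¹ ** s), []. split; [apply idem_inv_mul | split; [intros ? [] |]].
  unfold cell, diffs. simpl. rewrite <- beta_mul, mul_inv_mul. auto.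
Qed.

(* β(c) C(e, K) · β(c') C(e', K') = β(cc') C(e' (c'⁻¹ e c'), K' ++ c'⁻¹ K c'). *)
Lemma monomial_mul p q : monomial p -> monomial q -> monomial (p ** q).
Proof.
  intros [c [e [ks [He [Hks ->]]]]] [c' [e' [ks' [He' [Hks' ->]]]]].
  exists (c ** c'), (e' ** conj_by c' e), (ks' ++ map (conj_by c') ks).
  split; [apply idem_mul, idem_conj_inv; auto |].
  split; [apply all_idem_app; split; [| apply all_idem_conj]; auto |].
  rewrite <- cell_mul, <- cell_conj, beta_mul; auto;
    [| apply idem_conj_inv; auto | apply all_idem_conj; auto].
  rassoc. f_equal. rewrite (mulA (cell e ks) (beta c')), (idem_mul_shift (beta c') (cell e ks));
    auto with idem. rassoc. rewrite mul_inv_mulA. auto.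
Qed.

Lemma monomial_inv p : monomial p -> monomial p⁻¹.
Proof.
  intros [c [e [ks [He [Hks ->]]]]].
  exists c⁻¹, (conj_by c⁻¹ e), (map (conj_by c⁻¹) ks).
  split; [apply idem_conj_inv; auto | split; [apply all_idem_conj; auto |]].
  rewrite <- cell_conj, inv_mul, (idem_inv _ (cell_idem e ks He Hks)), beta_inv; auto.
  apply idem_mul_shift. auto with idem.
Qed.

Lemma monomial_le_beta p : monomial p -> exists c, p ≤ beta c.
Proof.
  intros [c [e [ks [He [Hks ->]]]]]. exists c. apply nat_le_mul_idem_r. auto with idem.
Qed.

Lemma is_cell_idem p : is_cell p -> idempotent p.
Proof. intros [e [ks [He [Hks ->]]]]. auto with idem. Qed.

Lemma is_cell_monomial p : is_cell p -> monomial p.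
Proof.
  intros [e [ks [He [Hks ->]]]]. exists e, e, ks. split; [auto | split; [auto |]].
  apply idem_nat_le_mul_l; auto with idem. apply cell_le; auto.
Qed.

(* An idempotent β(c) C(e, K) equals its own domain C(e (c⁻¹c), K). *)
Lemma monomial_idem_is_cell p : monomial p -> idempotent p -> is_cell p.
Proof.
  intros [c [e [ks [He [Hks ->]]]]] Hp. exists (e ** (c⁻¹ ** c)), ks.
  split; [apply idem_mul; auto with idem | split; [auto |]].
  rewrite (idem_eq_inv_mul _ Hp), inv_mul, (idem_inv _ (cell_idem e ks He Hks)).
  rassoc. rewrite (mulA (beta c)⁻¹ (beta c) (cell e ks)),
    (idem_comm ((beta c)⁻¹ ** beta c) (cell e ks)), idem_mulA; auto with idem.
  unfold cell. rewrite diffs_mul_r, !beta_mul, beta_inv; auto with idem.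
Qed.

Lemma join_of_cell_mul x y : join_of is_cell x -> join_of is_cell y -> join_of is_cell (x ** y).
Proof.
  apply join_of_mul. intros p q [e [ks [He [Hks ->]]]] [e' [ks' [He' [Hks' ->]]]].
  exists (e' ** e), (ks' ++ ks). split; [auto with idem | split].
  - apply all_idem_app; auto.
  - apply cell_mul; auto.
Qed.

Lemma join_of_cell_beta e : idempotent e -> join_of is_cell (beta e).
Proof.
  intro He. apply join_of_single. exists e, []. split; [auto | split; [intros ? [] | auto]].
Qed.

Lemma join_of_cell_idem x : join_of is_cell x -> idempotent x.
Proof. intros [L [HL [_ ->]]]. apply joins_idem. intros p Hp. apply is_cell_idem; auto. Qed.

Lemma join_of_cell_diff_beta x e : join_of is_cell x -> idempotent e ->
  join_of is_cell (diff x (beta e)).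
Proof.
  intros [L [HL [_ ->]]] He.
  assert (HLi : forall p, In p L -> idempotent p) by (intros p Hp; apply is_cell_idem; auto).
  rewrite diff_joins_l; auto with idem. apply join_of_joins_idem.
  - intros q Hq. apply in_map_iff in Hq. destruct Hq as [p [<- Hp]].
    destruct (HL p Hp) as [e' [ks [He' [Hks ->]]]]. exists e', (ks ++ [e]). split; [auto | split].
    + apply all_idem_app. split; [auto | intros ? [<- | []]; auto].
    + unfold cell. rewrite diffs_app. reflexivity.
  - intros q Hq. apply in_map_iff in Hq. destruct Hq as [p [<- Hp]]. auto with idem.
Qed.

Lemma join_of_cell_diff_cell e ks x : idempotent e -> all_idem ks -> join_of is_cell x ->
  join_of is_cell (diff x (cell e ks)).
Proof.
  revert x. induction ks as [| k ks IH] using rev_ind; intros x He Hks Hx.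
  - apply join_of_cell_diff_beta; auto.
  - apply all_idem_app in Hks. destruct Hks as [Hks Hk].
    assert (Hk' : idempotent k) by (apply Hk; left; auto).
    pose proof (join_of_cell_idem x Hx) as Hxi.
    unfold cell. rewrite diffs_app. fold (cell e ks). simpl.
    rewrite diff_diff_r; auto with idem. apply join_of_join; auto with idem.
    apply join_of_cell_mul; [apply join_of_cell_mul; auto |].
    + apply join_of_single. exists e, ks. auto.
    + apply join_of_cell_beta; auto.
Qed.

Lemma join_of_cell_diff x z : join_of is_cell x -> join_of is_cell z -> join_of is_cell (diff x z).
Proof.
  intros Hx [M [HM [_ ->]]]. revert x Hx. induction M as [| q M IH]; intros x Hx.
  - simpl. rewrite diff_zero_r; auto. apply join_of_cell_idem; auto.
  - assert (HMi : forall p, In p M -> idempotent p)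
      by (intros p Hp; apply is_cell_idem, HM; right; auto).
    destruct (HM q (or_introl eq_refl)) as [e [ks [He [Hks ->]]]]. simpl.
    rewrite diff_join_r; auto with idem; [| apply join_of_cell_idem; auto | apply joins_idem; auto].
    apply IH; [intros p Hp; apply HM; right; auto |]. apply join_of_cell_diff_cell; auto.
Qed.

Lemma join_of_cell_of_monomial x : join_of monomial x -> idempotent x -> join_of is_cell x.
Proof.
  intros [L [HL [Hb Ex]]] Hx. exists L. split; [| split; auto]. intros p Hp.
  apply monomial_idem_is_cell; auto. apply (idem_nat_le p x); auto.
Qed.

Theorem join_of_monomial x : join_of monomial x.
Proof.
  assert (Hcell : forall y, join_of is_cell y -> join_of monomial y)
    by (intro y; apply join_of_mono, is_cell_monomial).
  revert x. apply (booleanization_generated beta Hbool).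
  - intro s. apply join_of_single, monomial_beta.
  - apply join_of_zero.
  - intros x y. apply join_of_mul, monomial_mul.
  - intro x. apply join_of_inv, monomial_inv.
  - intros x y Hx Hy Hc. apply join_of_join; auto.
  - intros x k Hx Hk Hxi Hki. apply Hcell, join_of_cell_diff; apply join_of_cell_of_monomial; auto.
Qed.

Definition cell_of (ek : S * list S) : B := cell (fst ek) (snd ek).
Definition cell_index_ok (ek : S * list S) : Prop := idempotent (fst ek) /\ all_idem (snd ek).

Lemma cell_of_idem ek : cell_index_ok ek -> idempotent (cell_of ek).
Proof. intros [He Hks]. apply cell_idem; auto. Qed.

Lemma cells_bounded C : (forall ek, In ek C -> cell_index_ok ek) ->
  bounded (map cell_of C) (joins (map cell_of C)).
Proof.
  intro HC. apply joins_idem. intros p Hp. apply in_map_iff in Hp. destruct Hp as [ek [<- Hek]].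
  apply cell_of_idem; auto.
Qed.

Theorem idem_cell_decomposition x : idempotent x ->
  exists C, (forall ek, In ek C -> cell_index_ok ek) /\ x = joins (map cell_of C).
Proof.
  intro Hx. destruct (join_of_cell_of_monomial x (join_of_monomial x) Hx) as [L [HL [_ ->]]].
  destruct (list_lift cell_index_ok cell_of L) as [C [HC ->]]; [| exists C; auto].
  intros p Hp. destruct (HL p Hp) as [e [ks [He [Hks ->]]]]. exists (e, ks). split; [split |]; auto.
Qed.

Lemma diffs_mul_beta_zero x ks k : idempotent x -> all_idem ks -> In k ks ->
  diffs x ks ** beta k = zero.
Proof.
  revert x. induction ks as [| k' ks IH]; intros x Hx Hks Hk; [destruct Hk |].
  apply all_idem_cons in Hks. destruct Hks as [Hk' Hks]. rewrite diffs_cons.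
  assert (Hd : idempotent (diff x (beta k'))) by auto with idem.
  destruct Hk as [-> | Hk]; [| apply IH; auto].
  rewrite (idem_nat_le_mul_r (diffs _ ks) (diff x (beta k)) Hd) by (apply diffs_idem_le; auto).
  rewrite <- mulA, diff_mul_zero; auto with idem. apply zero_r.
Qed.

Definition pointed (ek : S * list S) : Prop :=
  fst ek <> zero /\ forall k, In k (snd ek) -> k ** fst ek <> fst ek.

Lemma cell_of_not_pointed ek : cell_index_ok ek -> ~ pointed ek -> cell_of ek = zero.
Proof.
  destruct ek as [e ks]. unfold cell_of, pointed. simpl. intros [He Hks] HP.
  apply not_and_or in HP. destruct HP as [HP | HP].
  - apply NNPP in HP. subst e. apply nat_le_zero_eq. rewrite <- (hom_zero _ _ _ Hh).
    apply cell_le; auto.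
  - apply not_all_ex_not in HP. destruct HP as [k HP]. apply imply_to_and in HP.
    destruct HP as [Hk HP]. apply NNPP in HP.
    rewrite (idem_nat_le_mul_r (cell e ks) (beta e)) by (auto with idem; apply cell_le; auto).
    rewrite <- HP at 2. rewrite beta_mul, mulA. unfold cell at 1.
    rewrite diffs_mul_beta_zero; auto with idem. apply zero_l.
Qed.
End NormalForm.

(** * The extended representation *)

Section Representation.
Context {S B : InvSemigroup0} (beta : S -> B).
Hypothesis Hbool : is_booleanization S B beta.
Let HB : boolean_inverse_semigroup B := proj1 Hbool.
#[local] Existing Instance HB.
Let Hh : homomorphism S B beta := proj1 (proj2 Hbool).
Implicit Types (a b e k : S) (ks : list S) (x y : B) (u v w : point S).

Local Hint Resolve idem_mul idem_zero idem_inv_mul idem_mul_inv join_idem compatible_idem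
  diff_idem : idem.

Lemma wp_extension : exists gam : B -> pbij (point S),
  morphism B (SymInv (point S)) gam /\ forall s, wp S s = gam (beta s).
Proof.
  pose proof Hbool as [_ [_ [_ U]]].
  apply (U (SymInv (point S)) (wp S) (sym_boolean _) (wp_hom S)).
Qed.

Let gam_spec := constructive_indefinite_description _ wp_extension.
Let gam : B -> pbij (point S) := proj1_sig gam_spec.
Let gam_hom : homomorphism B (SymInv (point S)) gam := proj1 (proj1 (proj2_sig gam_spec)).
Let gam_join_hom : forall x y j, compatible x y -> is_join x y j ->
  @is_join (SymInv (point S)) (gam x) (gam y) (gam j) := proj2 (proj1 (proj2_sig gam_spec)).
Let gam_beta : forall s, wp S s = gam (beta s) := proj2 (proj2_sig gam_spec).

Local Notation val := (@proj1_sig S (fun z => z <> zero)).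

Lemma gam_le x y u v : x ≤ y -> gam x u v -> gam y u v.
Proof. intro H. apply (sym_nat_leE (point S)), (hom_nat_le _ _ _ gam_hom), H. Qed.

Lemma gam_zero u v : ~ gam zero u v.
Proof. rewrite (hom_zero _ _ _ gam_hom). simpl. auto. Qed.

Lemma gam_mul x y u v : gam (x ** y) u v <-> exists w, gam y u w /\ gam x w v.
Proof. rewrite (hom_mul _ _ _ gam_hom). reflexivity. Qed.

Lemma gam_idem x u v : idempotent x -> gam x u v -> u = v.
Proof. intro Hx. apply (sym_idemE (point S)), (hom_idem _ _ _ gam_hom), Hx. Qed.

Lemma gam_idem_beta e u v : idempotent e -> gam (beta e) u v <-> e ** val u = val u /\ v = u.
Proof. intro He. rewrite <- gam_beta. apply wp_idemE; auto. Qed.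

Lemma gam_join x y u v : compatible x y -> gam (join x y) u v <-> gam x u v \/ gam y u v.
Proof.
  intro Hc.
  assert (Hc' : @compatible (SymInv (point S)) (gam x) (gam y)).
  { apply compatible_of_nat_le with (gam (join x y)); apply (hom_nat_le _ _ _ gam_hom);
      [apply le_join_l | apply le_join_r]; auto. }
  exact (proj1 (sym_is_joinE _ _ _ _ Hc') (gam_join_hom x y _ Hc (join_is_join x y Hc)) u v).
Qed.

Lemma gam_joins (L : list B) (t : B) u v : bounded L t ->
  gam (joins L) u v <-> exists p, In p L /\ gam p u v.
Proof.
  induction L as [| p L IH]; intros Hb.
  - split; [intro H; exfalso; eapply gam_zero; eauto | intros [? [[] _]]].
  - apply bounded_cons in Hb. destruct Hb as [Hp Hb]. simpl.
    rewrite gam_join, IH; [| auto | apply compatible_of_nat_le with t; auto; apply joins_le; auto].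
    split.
    + intros [H | [q [Hq H]]]; eauto.
    + intros [q [[<- | Hq] H]]; eauto.
Qed.

Lemma gam_diff x y u v : idempotent x -> idempotent y ->
  gam (diff x y) u v <-> gam x u v /\ ~ gam (x ** y) u v.
Proof.
  intros Hx Hy. split.
  - intro H. split; [eapply gam_le; eauto; apply diff_le; auto |].
    intro H2. pose proof (gam_idem _ _ _ (diff_idem x y Hx Hy) H). subst v.
    apply (gam_zero u u). rewrite <- (diff_mul_zero x y Hx Hy).
    rewrite (idem_nat_le_mul_r (diff x y) x Hx (diff_le x y Hx Hy)), <- mulA.
    apply gam_mul. eauto.
  - intros [H1 H2]. rewrite <- (join_diff x y Hx Hy), gam_join in H1; auto with idem.
    destruct H1; tauto.
Qed.

Lemma gam_diffs x ks u v : idempotent x -> all_idem ks ->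
  gam (diffs beta x ks) u v <-> gam x u v /\ forall k, In k ks -> k ** val u <> val u.
Proof.
  revert x. induction ks as [| k ks IH]; intros x Hx Hks.
  - simpl. split; [intros H; split; [auto | intros ? []] | tauto].
  - apply all_idem_cons in Hks. destruct Hks as [Hk Hks].
    assert (Hbk : idempotent (beta k)) by (apply (hom_idem _ _ _ Hh); auto).
    rewrite diffs_cons, IH, gam_diff, gam_mul; auto with idem.
    assert (E : (exists w, gam (beta k) u w /\ gam x w v) <-> k ** val u = val u /\ gam x u v).
    { split.
      - intros [w [H1 H2]]. rewrite gam_idem_beta in H1; auto. destruct H1 as [H1 ->]. auto.
      - intros [H1 H2]. exists u. rewrite gam_idem_beta; auto. }
    rewrite E. split.
    + intros [[H1 H2] H3]. split; auto. intros k' [<- | Hk']; auto.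
    + intros [H1 H2]. split; [split |]; auto.
      * intros [H3 _]. apply (H2 k); auto. left; auto.
      * intros k' Hk'. apply H2. right; auto.
Qed.

Lemma gam_cell e ks u v : idempotent e -> all_idem ks ->
  gam (cell beta e ks) u v <->
  (e ** val u = val u /\ v = u) /\ forall k, In k ks -> k ** val u <> val u.
Proof.
  intros He Hks. assert (Hbe : idempotent (beta e)) by (apply (hom_idem _ _ _ Hh); auto).
  unfold cell. rewrite gam_diffs, gam_idem_beta; auto. reflexivity.
Qed.

Lemma cells_cover C i : (forall ek, In ek C -> cell_index_ok ek) ->
  idempotent i -> i <> zero -> beta i ≤ joins (map (cell_of beta) C) ->
  exists ek, In ek C /\ pointed ek /\ i ≤ fst ek.
Proof.
  intros HC Hi Hi0 Hle. set (u := exist _ i Hi0 : point S).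
  assert (Hu : gam (joins (map (cell_of beta) C)) u u).
  { apply gam_le with (beta i); auto. apply gam_idem_beta; auto. }
  rewrite (gam_joins _ _ _ _ (cells_bounded beta Hbool C HC)) in Hu.
  destruct Hu as [p [Hp Hpu]]. apply in_map_iff in Hp. destruct Hp as [[e ks] [<- Hek]].
  destruct (HC _ Hek) as [He Hks]. unfold cell_of in Hpu. simpl in *.
  rewrite gam_cell in Hpu; auto. destruct Hpu as [[Hei _] Hks_u]. simpl in Hei, Hks_u.
  exists (e, ks). split; [auto | split; [split |]]; simpl.
  - intros ->. apply Hi0. rewrite <- Hei. apply zero_l.
  - intros k Hk Hke. apply (Hks_u k Hk). rewrite <- Hei, mulA, Hke. auto.
  - apply idem_nat_leE; auto. split; auto. rewrite idem_comm, Hei; auto.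
Qed.

(* Evaluate both sides at the point e of the cell, which lies in the domain of a. *)
Lemma cell_agree a b ek : cell_index_ok ek -> pointed ek -> cell_of beta ek ≤ beta (a⁻¹ ** a) ->
  beta a ** cell_of beta ek = beta b ** cell_of beta ek -> a ** fst ek = b ** fst ek.
Proof.
  destruct ek as [e ks]. unfold cell_of, pointed. simpl. intros [He Hks] [He0 Hks_e] Hle E.
  set (u := exist _ e He0 : point S).
  assert (Hcell : gam (cell beta e ks) u u) by (apply gam_cell; auto).
  assert (Hdom : a⁻¹ ** a ** e = e).
  { apply gam_le with (y := beta (a⁻¹ ** a)) in Hcell; auto.
    apply gam_idem_beta in Hcell; [apply Hcell | apply idem_inv_mul]. }
  assert (Hae : a ** e <> zero).
  { intro Hz. apply He0. rewrite <- Hdom, <- mulA, Hz. apply zero_r. }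
  set (v := exist _ (a ** e) Hae : point S).
  assert (Hv : gam (beta a ** cell beta e ks) u v).
  { apply gam_mul. exists u. split; [auto |]. rewrite <- gam_beta. split; auto. }
  rewrite E in Hv. apply gam_mul in Hv. destruct Hv as [w [Hw Hbw]].
  apply gam_cell in Hw; auto. destruct Hw as [[_ ->] _].
  rewrite <- gam_beta in Hbw. destruct Hbw as [_ Hb]. exact Hb.
Qed.
End Representation.

(** * Meets in the Booleanization *)

Section Main.
Context {S B : InvSemigroup0} (beta : S -> B).
Hypothesis Hbool : is_booleanization S B beta.
Let HB : boolean_inverse_semigroup B := proj1 Hbool.
#[local] Existing Instance HB.
Let Hh : homomorphism S B beta := proj1 (proj2 Hbool).
Local Notation is_meet := (is_glb_in anyS).
Local Notation cell_of := (cell_of beta).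

(* Restrict z = β(a) z⁻¹z = β(b) z⁻¹z to each cell of z⁻¹z. *)
Lemma cells_agree_below a b z C : z ≤ beta a -> z ≤ beta b ->
  (forall ek, In ek C -> cell_index_ok ek) -> z⁻¹ ** z = joins (map cell_of C) ->
  forall ek, In ek C -> pointed ek -> a ** fst ek = b ** fst ek.
Proof.
  intros Ha Hb HC Ez ek Hek Hpt.
  assert (Hcell : cell_of ek ≤ z⁻¹ ** z).
  { rewrite Ez. apply le_joins with (joins (map cell_of C));
      [apply cells_bounded | apply in_map]; auto. }
  assert (Hrestrict : forall c, z ≤ beta c -> beta c ** cell_of ek = z ** cell_of ek).
  { intros c Hc. apply nat_leE in Hc.
    rewrite (idem_nat_le_mul_l (cell_of ek) (z⁻¹ ** z)) at 1 by (apply idem_inv_mul || auto).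
    rewrite mulA, <- Hc. reflexivity. }
  apply (cell_agree beta Hbool); auto.
  - eapply nat_le_trans; [exact Hcell |].
    rewrite (beta_mul beta Hbool), (beta_inv beta Hbool). apply nat_le_inv_mul; auto.
  - rewrite !Hrestrict; auto.
Qed.

Lemma weak_semilattice_of_beta_meets :
  (forall a b, exists m, is_meet (beta a) (beta b) m) -> weak_semilattice S.
Proof.
  intros Hmeet a b. destruct (Hmeet a b) as [m [_ [Hma [Hmb Hm]]]].
  destruct (idem_cell_decomposition beta Hbool (m⁻¹ ** m) (idem_inv_mul m)) as [C [HC Em]].
  pose proof (cells_agree_below a b m C Hma Hmb HC Em) as Hagree.
  destruct (list_image pointed (fun ek => a ** fst ek) C) as [F HF].
  exists (zero :: F). intro s. split.
  - intros [Hsa Hsb]. destruct (classic (s = zero)) as [-> | Hs0].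
    { exists zero. split; [left; auto | apply nat_le_refl]. }
    assert (Hs : beta (s⁻¹ ** s) ≤ joins (map cell_of C)).
    { rewrite <- Em, (beta_mul beta Hbool), (beta_inv beta Hbool).
      apply nat_le_inv_mul, Hm; [exact I | |]; apply (hom_nat_le _ _ _ Hh); auto. }
    destruct (cells_cover beta Hbool C (s⁻¹ ** s) HC (idem_inv_mul s)) as [ek [Hek [Hpt Hle]]];
      auto using inv_mul_eq_zero.
    exists (a ** fst ek). split; [right; apply HF; eauto |].
    apply nat_leE in Hsa. rewrite Hsa. apply nat_le_mul_l; auto.
  - intros [f [[<- | Hf] Hsf]].
    + apply nat_le_zero_eq in Hsf. subst. split; apply nat_le_zero.
    + apply HF in Hf. destruct Hf as [ek [Hek [Hpt ->]]].
      split; eapply nat_le_trans; eauto; [| rewrite (Hagree ek Hek Hpt)];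
        apply nat_le_mul_idem_r, HC; auto.
Qed.

Lemma beta_meets_of_weak_semilattice :
  weak_semilattice S -> forall a b, exists m, is_meet (beta a) (beta b) m.
Proof.
  intros Hw a b. destruct (Hw a b) as [F HF].
  assert (HFab : forall f, In f F -> f ≤ a /\ f ≤ b).
  { intros f Hf. apply HF. exists f. split; [auto | apply nat_le_refl]. }
  assert (HFb : forall c, (forall f, In f F -> f ≤ c) -> bounded (map beta F) (beta c)).
  { intros c Hc q Hq. apply in_map_iff in Hq. destruct Hq as [f [<- Hf]].
    apply (hom_nat_le _ _ _ Hh); auto. }
  exists (joins (map beta F)). split; [exact I | split; [| split]].
  1, 2: apply joins_le, HFb; intros f Hf; apply HFab; auto.
  intros z _ Hza Hzb.
  destruct (idem_cell_decomposition beta Hbool (z⁻¹ ** z) (idem_inv_mul z)) as [C [HC Ez]].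
  pose proof (cells_agree_below a b z C Hza Hzb HC Ez) as Hagree.
  apply nat_leE in Hza. rewrite Hza, Ez, (joins_mul_l _ _ _ (cells_bounded beta Hbool C HC)).
  apply joins_le. intros q Hq. apply in_map_iff in Hq. destruct Hq as [p [<- Hp]].
  apply in_map_iff in Hp. destruct Hp as [ek [<- Hek]]. destruct (HC ek Hek) as [He Hks].
  destruct (classic (pointed ek)) as [Hpt | Hpt].
  - destruct (proj1 (HF (a ** fst ek))) as [f [Hf Hef]].
    { rewrite (Hagree ek Hek Hpt) at 2. split; apply nat_le_mul_idem_r; auto. }
    apply nat_le_trans with (beta a ** beta (fst ek)); [apply nat_le_mul_l, cell_le; auto |].
    rewrite <- (beta_mul beta Hbool). apply nat_le_trans with (beta f).
    + apply (hom_nat_le _ _ _ Hh); auto.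
    + apply le_joins with (beta a); [apply HFb; intros; apply HFab; auto | apply in_map; auto].
  - rewrite (cell_of_not_pointed beta Hbool), zero_r; [apply nat_le_zero | split |]; auto.
Qed.

Lemma wedge_semigroup_of_beta_meets :
  (forall a b, exists m, is_meet (beta a) (beta b) m) -> wedge_semigroup B.
Proof.
  intro Hmeet. apply (wedge_of_generators (fun g => exists c, g = beta c)).
  - intro x. apply join_of_mono with (monomial beta); [| apply (join_of_monomial beta Hbool)].
    intros p Hp. destruct (monomial_le_beta beta Hbool p Hp) as [c Hc]. eauto.
  - intros g g' [a ->] [b ->]. apply Hmeet.
Qed.
End Main.

Theorem proposition2p13 (S B : InvSemigroup0) (beta : S -> B) :
  is_booleanization S B beta ->
  (weak_semilattice S <-> wedge_semigroup B).
Proof.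
  intros Hbool. split.
  - intros Hw. apply (wedge_semigroup_of_beta_meets beta Hbool).
    apply (beta_meets_of_weak_semilattice beta Hbool Hw).
  - intros Hw. apply (weak_semilattice_of_beta_meets beta Hbool). intros a b. apply Hw.
Qed.
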